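(* Let $(\psi,v)$ be a (sufficiently smooth) solution of $$-i\gamma^\mu\partial_\mu\psi=v\psi,\qquad -\Box v+v=\psi^*\gamma^0\psi\quad\text{on }[0,\infty)\times\mathbb{R}^2,$$ and let $\Psi$ solve $-\Box\Psi=i\gamma^\mu\partial_\mu\psi$ on $[0,\infty)\times\mathbb{R}^2$ with $(\Psi,\partial_t\Psi)|_{t=0}=(0,i\gamma^0\psi(0,\cdot))$ (so that $-i\gamma^\mu\partial_\mu\Psi=\psi$). Then: (i) with $\widetilde\psi=\psi+i\gamma^\mu\partial_\mu(v\psi)$, one has $-i\gamma^\mu\partial_\mu\widetilde\psi=\mathcal{N}_1(\psi,v)+\mathcal{N}_2(\psi,\psi^* )+2Q_0(\psi,v)$; (ii) with $\widetilde\Psi=\Psi-v\psi$, one has $-\Box\widetilde\Psi=-\mathcal{N}_1(\psi,v)-\mathcal{N}_2(\psi,\psi^* )-2Q_0(\psi,v)$; (iii) with $\tilde v=v-\psi^*\gamma^0\psi$, one has $-\Box\tilde v+\tilde v=\mathcal{N}_3(\psi,v)+\mathcal{N}_4(\psi,\psi^* )$; (iv) for every $I\in\mathbb{N}^6$, $\big[\widehat\Gamma^I\psi\big]_-=-i\big(I_2-\omega_a\gamma^0\gamma^a\big)\gamma^bG_b\widehat\Gamma^I\Psi$.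
   Context: Coordinates $(t,x)=(x_0,x_1,x_2)$, $r=|x|$, $\omega_a=x_a/r$, summation over repeated indices (Greek in $\{0,1,2\}$, Latin in $\{1,2\}$), $\eta=\mathrm{diag}(-1,1,1)$, $\Box=\eta^{\alpha\beta}\partial_\alpha\partial_\beta$, $\partial^\alpha=\eta^{\alpha\beta}\partial_\beta$. Dirac matrices: $\gamma^0=\begin{pmatrix}1&0\\0&-1\end{pmatrix}$, $\gamma^1=\begin{pmatrix}0&1\\-1&0\end{pmatrix}$, $\gamma^2=\begin{pmatrix}0&-i\\-i&0\end{pmatrix}$; $A^*$ is the conjugate transpose; $I_2$ the identity. Null form: $Q_0(f,g)=\partial_tf\,\partial_tg-\partial_af\,\partial_ag$. Nonlinearities: $\mathcal{N}_1(\psi,v)=i\,v\gamma^\mu\partial_\mu(v\psi)$, $\mathcal{N}_2(\psi,\psi^* )=(\psi^*\gamma^0\psi)\psi$, $\mathcal{N}_3(\psi,v)=i\,\partial_\mu(v\psi^* )\gamma^0\gamma^\mu\psi-i\,\psi^*\gamma^0\gamma^\mu\partial_\mu(v\psi)$, $\mathcal{N}_4(\psi,\psi^* )=2\eta^{\alpha\beta}\partial_\alpha\psi^*\gamma^0\partial_\beta\psi$. For $\phi:\mathbb{R}^{1+2}\to\mathbb{C}^2$, $[\phi]_-=\phi-\omega_a\gamma^0\gamma^a\phi$. Good derivatives $G_a=\partial_a+\omega_a\partial_t$. Modified vector fields: $\widehat\Omega=x_1\partial_2-x_2\partial_1-\tfrac12\gamma^1\gamma^2$, $\widehat L_a=t\partial_a+x_a\partial_t-\tfrac12\gamma^0\gamma^a$;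 $(\widehat\Gamma_1,\dots,\widehat\Gamma_6)=(\partial_t,\partial_1,\partial_2,\widehat\Omega,\widehat L_1,\widehat L_2)$, $\widehat\Gamma^I=\prod_k\widehat\Gamma_k^{i_k}$ for $I=(i_1,\dots,i_6)$. *)

From Stdlib Require Import Reals List.
From Coquelicot Require Import Coquelicot.
Open Scope R_scope.

(* Fields on R^{1+2}: functions of (t, x1, x2). *)
Definition fld (T : Type) := R -> R -> R -> T.

Inductive dir := Dt | D1 | D2.

Definition pdR (d : dir) (f : fld R) : fld R :=
  match d with
  | Dt => fun t x1 x2 => Derive (fun s => f s x1 x2) t
  | D1 => fun t x1 x2 => Derive (fun s => f t s x2) x1
  | D2 => fun t x1 x2 => Derive (fun s => f t x1 s) x2
  end.

Definition ex_pdR (d : dir) (f : fld R) (t x1 x2 : R) : Prop :=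
  match d with
  | Dt => ex_derive (fun s => f s x1 x2) t
  | D1 => ex_derive (fun s => f t s x2) x1
  | D2 => ex_derive (fun s => f t x1 s) x2
  end.

Definition iter_pdR (l : list dir) (f : fld R) : fld R := fold_right pdR f l.

Definition smoothR (f : fld R) : Prop :=
  forall (l : list dir) (t x1 x2 : R),
    continuous (fun p : R * R * R => iter_pdR l f (fst (fst p)) (snd (fst p)) (snd p))
               (t, x1, x2)
    /\ (forall d, ex_pdR d (iter_pdR l f) t x1 x2).

Definition pdC (d : dir) (f : fld C) : fld C :=
  fun t x1 x2 => (pdR d (fun t x1 x2 => Re (f t x1 x2)) t x1 x2,
                  pdR d (fun t x1 x2 => Im (f t x1 x2)) t x1 x2).

Definition smoothC (f : fld C) : Prop :=
  smoothR (fun t x1 x2 => Re (f t x1 x2)) /\ smoothR (fun t x1 x2 => Im (f t x1 x2)).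

Definition spinor := (C * C)%type.

Definition szero : spinor := (RtoC 0, RtoC 0).
Definition sadd (u w : spinor) : spinor := (fst u + fst w, snd u + snd w)%C.
Definition sopp (u : spinor) : spinor := (- fst u, - snd u)%C.
Definition ssub (u w : spinor) : spinor := sadd u (sopp w).
Definition sscal (c : C) (u : spinor) : spinor := (c * fst u, c * snd u)%C.
Definition hdot (u w : spinor) : C :=
  (Cconj (fst u) * fst w + Cconj (snd u) * snd w)%C.

Definition pdS (d : dir) (f : fld spinor) : fld spinor :=
  fun t x1 x2 => (pdC d (fun t x1 x2 => fst (f t x1 x2)) t x1 x2,
                  pdC d (fun t x1 x2 => snd (f t x1 x2)) t x1 x2).

Definition smoothS (f : fld spinor) : Prop :=
  smoothC (fun t x1 x2 => fst (f t x1 x2)) /\ smoothC (fun t x1 x2 => snd (f t x1 x2)).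

Record M2 := mkM2 { m11 : C; m12 : C; m21 : C; m22 : C }.

Definition mv (A : M2) (u : spinor) : spinor :=
  (m11 A * fst u + m12 A * snd u, m21 A * fst u + m22 A * snd u)%C.
Definition mm (A B : M2) : M2 :=
  mkM2 (m11 A * m11 B + m12 A * m21 B)%C (m11 A * m12 B + m12 A * m22 B)%C
       (m21 A * m11 B + m22 A * m21 B)%C (m21 A * m12 B + m22 A * m22 B)%C.
Definition madd (A B : M2) : M2 :=
  mkM2 (m11 A + m11 B)%C (m12 A + m12 B)%C (m21 A + m21 B)%C (m22 A + m22 B)%C.
Definition mscal (c : C) (A : M2) : M2 :=
  mkM2 (c * m11 A)%C (c * m12 A)%C (c * m21 A)%C (c * m22 A)%C.
Definition I2 : M2 := mkM2 (RtoC 1) (RtoC 0) (RtoC 0) (RtoC 1).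

Definition gamma0 : M2 := mkM2 (RtoC 1) (RtoC 0) (RtoC 0) (RtoC (-1)).
Definition gamma1 : M2 := mkM2 (RtoC 0) (RtoC 1) (RtoC (-1)) (RtoC 0).
Definition gamma2 : M2 := mkM2 (RtoC 0) (- Ci)%C (- Ci)%C (RtoC 0).
Definition gam (d : dir) : M2 :=
  match d with Dt => gamma0 | D1 => gamma1 | D2 => gamma2 end.
Definition eta (d : dir) : R := match d with Dt => -1 | _ => 1 end.

Definition sumS (F : dir -> spinor) : spinor := sadd (F Dt) (sadd (F D1) (F D2)).
Definition sumC (F : dir -> C) : C := (F Dt + (F D1 + F D2))%C.
Definition sumR (F : dir -> R) : R := F Dt + (F D1 + F D2).

Definition dirac (f : fld spinor) : fld spinor :=
  fun t x1 x2 => sumS (fun mu => mv (gam mu) (pdS mu f t x1 x2)).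

Definition boxR (f : fld R) : fld R :=
  fun t x1 x2 => sumR (fun mu => eta mu * pdR mu (pdR mu f) t x1 x2).
Definition boxC (f : fld C) : fld C :=
  fun t x1 x2 => sumC (fun mu => RtoC (eta mu) * pdC mu (pdC mu f) t x1 x2)%C.
Definition boxS (f : fld spinor) : fld spinor :=
  fun t x1 x2 => sumS (fun mu => sscal (RtoC (eta mu)) (pdS mu (pdS mu f) t x1 x2)).

Definition rmulS (v : fld R) (f : fld spinor) : fld spinor :=
  fun t x1 x2 => sscal (RtoC (v t x1 x2)) (f t x1 x2).

Definition Q0 (psi : fld spinor) (v : fld R) : fld spinor :=
  fun t x1 x2 => sumS (fun mu => sscal (RtoC (- eta mu * pdR mu v t x1 x2)) (pdS mu psi t x1 x2)).

Definition N1 (psi : fld spinor) (v : fld R) : fld spinor :=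
  fun t x1 x2 => sscal (Ci * RtoC (v t x1 x2))%C (dirac (rmulS v psi) t x1 x2).
Definition N2 (psi : fld spinor) : fld spinor :=
  fun t x1 x2 => sscal (hdot (psi t x1 x2) (mv gamma0 (psi t x1 x2))) (psi t x1 x2).
(* since v is real, d_mu (v psi^star) = (d_mu (v psi))^star *)
Definition N3 (psi : fld spinor) (v : fld R) : fld C :=
  fun t x1 x2 => sumC (fun mu =>
    (Ci * hdot (pdS mu (rmulS v psi) t x1 x2) (mv (mm gamma0 (gam mu)) (psi t x1 x2))
     - Ci * hdot (psi t x1 x2) (mv (mm gamma0 (gam mu)) (pdS mu (rmulS v psi) t x1 x2)))%C).
Definition N4 (psi : fld spinor) : fld C :=
  fun t x1 x2 => sumC (fun mu =>
    (RtoC (2 * eta mu) * hdot (pdS mu psi t x1 x2) (mv gamma0 (pdS mu psi t x1 x2)))%C).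

Definition rad (x1 x2 : R) : R := sqrt (x1 ^ 2 + x2 ^ 2).
Definition om1 (x1 x2 : R) : R := x1 / rad x1 x2.
Definition om2 (x1 x2 : R) : R := x2 / rad x1 x2.

Definition omgg (x1 x2 : R) : M2 :=
  madd (mscal (RtoC (om1 x1 x2)) (mm gamma0 gamma1))
       (mscal (RtoC (om2 x1 x2)) (mm gamma0 gamma2)).

Definition minus_part (x1 x2 : R) (u : spinor) : spinor := ssub u (mv (omgg x1 x2) u).

Definition gammaG (f : fld spinor) : fld spinor :=
  fun t x1 x2 =>
    sadd (mv gamma1 (sadd (pdS D1 f t x1 x2) (sscal (RtoC (om1 x1 x2)) (pdS Dt f t x1 x2))))
         (mv gamma2 (sadd (pdS D2 f t x1 x2) (sscal (RtoC (om2 x1 x2)) (pdS Dt f t x1 x2)))).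

Definition half : C := RtoC (1 / 2).
Definition Omega_hat (f : fld spinor) : fld spinor :=
  fun t x1 x2 =>
    ssub (sadd (sscal (RtoC x1) (pdS D2 f t x1 x2)) (sscal (RtoC (- x2)) (pdS D1 f t x1 x2)))
         (sscal half (mv (mm gamma1 gamma2) (f t x1 x2))).
Definition L1_hat (f : fld spinor) : fld spinor :=
  fun t x1 x2 =>
    ssub (sadd (sscal (RtoC t) (pdS D1 f t x1 x2)) (sscal (RtoC x1) (pdS Dt f t x1 x2)))
         (sscal half (mv (mm gamma0 gamma1) (f t x1 x2))).
Definition L2_hat (f : fld spinor) : fld spinor :=
  fun t x1 x2 =>
    ssub (sadd (sscal (RtoC t) (pdS D2 f t x1 x2)) (sscal (RtoC x2) (pdS Dt f t x1 x2)))
         (sscal half (mv (mm gamma0 gamma2) (f t x1 x2))).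

Definition multi6 := (nat * nat * nat * nat * nat * nat)%type.

Definition GammaI (I : multi6) (f : fld spinor) : fld spinor :=
  let '(i1, i2, i3, i4, i5, i6) := I in
  Nat.iter i1 (pdS Dt) (Nat.iter i2 (pdS D1) (Nat.iter i3 (pdS D2)
    (Nat.iter i4 Omega_hat (Nat.iter i5 L1_hat (Nat.iter i6 L2_hat f))))).

(* Identities (i)-(iii) are pointwise computations: in real components they follow from the
   Leibniz rule, the symmetry of second derivatives, [(gamma^mu d_mu)^2 = - Box] and the field
   equations. For (iv), the defect [-i gamma^mu d_mu Psi - psi] solves the wave equation with
   zero Cauchy data, so it vanishes for [t >= 0] by a weighted local energy estimate. The
   modified vector fields commute with [gamma^mu d_mu], hence
   [Gamma^I psi = -i gamma^mu d_mu Gamma^I Psi], and since [|omega| = 1] the projection [[.]_-]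
   turns the time derivative in [gamma^mu d_mu] into good derivatives. *)

From Stdlib Require Import Reals Lra List ClassicalEpsilon FunctionalExtensionality.
From Coquelicot Require Import Coquelicot.
Open Scope R_scope.

(** * Smooth real fields *)

Definition continuous3 (f : fld R) : Prop :=
  forall t x y, continuous (fun q : R * R * R => f (fst (fst q)) (snd (fst q)) (snd q)) (t, x, y).

Lemma continuous_pair {T U V : UniformSpace} (f : T -> U) (g : T -> V) (x : T) :
  continuous f x -> continuous g x -> continuous (fun z => (f z, g z)) x.
Proof.
  intros Hf Hg P [e HP].
  apply (filterlim_pair f g Hf Hg).
  exists (ball (f x) e) (ball (g x) e); try now exists e.
  intros u w Hu Hw; apply HP; split; assumption.
Qed.

Lemma continuous3_plus f g : continuous3 f -> continuous3 g ->
  continuous3 (fun t x y => f t x y + g t x y).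
Proof. intros Hf Hg t x y. exact (continuous_plus _ _ _ (Hf t x y) (Hg t x y)). Qed.

Lemma continuous3_mult f g : continuous3 f -> continuous3 g ->
  continuous3 (fun t x y => f t x y * g t x y).
Proof. intros Hf Hg t x y. exact (continuous_mult _ _ _ (Hf t x y) (Hg t x y)). Qed.

Lemma continuous3_opp f : continuous3 f -> continuous3 (fun t x y => - f t x y).
Proof. intros Hf t x y. exact (continuous_opp _ _ (Hf t x y)). Qed.

Lemma continuous3_minus f g : continuous3 f -> continuous3 g ->
  continuous3 (fun t x y => f t x y - g t x y).
Proof. intros. apply continuous3_plus, continuous3_opp; assumption. Qed.

Lemma continuous3_const c : continuous3 (fun _ _ _ => c).
Proof. intros t x y. apply continuous_const. Qed.

Lemma continuous3_t : continuous3 (fun t _ _ => t).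
Proof.
  intros t x y. apply (continuous_comp (fun q : R * R * R => fst q) fst);
    apply continuous_fst.
Qed.

Lemma continuous3_x : continuous3 (fun _ x _ => x).
Proof.
  intros t x y. apply (continuous_comp (fun q : R * R * R => fst q) snd).
  - apply continuous_fst.
  - apply continuous_snd.
Qed.

Lemma continuous3_y : continuous3 (fun _ _ y => y).
Proof. intros t x y. apply continuous_snd. Qed.

Lemma continuous3_comp (g : R -> R) f : (forall z, continuous g z) -> continuous3 f ->
  continuous3 (fun t x y => g (f t x y)).
Proof.
  intros Hg Hf t x y.
  apply (continuous_comp (fun q : R * R * R => f (fst (fst q)) (snd (fst q)) (snd q)) g).
  - apply Hf.
  - apply Hg.
Qed.

Lemma continuous3_comp3 G a b c :
  continuous3 G -> continuous3 a -> continuous3 b -> continuous3 c ->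
  continuous3 (fun t x y => G (a t x y) (b t x y) (c t x y)).
Proof.
  intros HG Ha Hb Hc t x y.
  apply (continuous_comp
    (fun q : R * R * R => (a (fst (fst q)) (snd (fst q)) (snd q),
                           b (fst (fst q)) (snd (fst q)) (snd q),
                           c (fst (fst q)) (snd (fst q)) (snd q)))
    (fun q : R * R * R => G (fst (fst q)) (snd (fst q)) (snd q))).
  - repeat apply continuous_pair; auto.
  - apply HG.
Qed.

Lemma continuous3_along f (a b c : R -> R) s : continuous3 f ->
  continuous a s -> continuous b s -> continuous c s ->
  continuous (fun s => f (a s) (b s) (c s)) s.
Proof.
  intros Hf Ha Hb Hc.
  apply (continuous_comp (fun s => (a s, b s, c s))
                         (fun q : R * R * R => f (fst (fst q)) (snd (fst q)) (snd q))).
  - repeat apply continuous_pair; auto.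
  - apply Hf.
Qed.

Lemma continuous3_slice_y f t x y : continuous3 f -> continuous (fun s => f t x s) y.
Proof.
  intros Hf. apply continuous3_along; auto using continuous_id, continuous_const.
Qed.

Lemma continuity_2d_pt_comp3 f (a b c : R -> R -> R) u v : continuous3 f ->
  continuity_2d_pt a u v -> continuity_2d_pt b u v -> continuity_2d_pt c u v ->
  continuity_2d_pt (fun u v => f (a u v) (b u v) (c u v)) u v.
Proof.
  intros Hf Ha Hb Hc. apply continuity_2d_pt_filterlim in Ha, Hb, Hc.
  apply continuity_2d_pt_filterlim.
  apply (continuous_comp
    (fun z : R * R => (a (fst z) (snd z), b (fst z) (snd z), c (fst z) (snd z)))
    (fun q : R * R * R => f (fst (fst q)) (snd (fst q)) (snd q)) (u, v)).
  - repeat apply continuous_pair; auto.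
  - apply Hf.
Qed.

Definition slice (d : dir) (f : fld R) t x y : R -> R :=
  match d with
  | Dt => fun s => f s x y
  | D1 => fun s => f t s y
  | D2 => fun s => f t x s
  end.

Definition coord (d : dir) (t x y : R) : R :=
  match d with Dt => t | D1 => x | D2 => y end.

Lemma pdR_slice d f t x y : pdR d f t x y = Derive (slice d f t x y) (coord d t x y).
Proof. now destruct d. Qed.

Lemma ex_pdR_slice d f t x y : ex_pdR d f t x y = ex_derive (slice d f t x y) (coord d t x y).
Proof. now destruct d. Qed.

Definition partially_differentiable (f : fld R) : Prop :=
  forall d t x y, ex_pdR d f t x y.

Ltac fld_ext := apply functional_extensionality; intro t;
  apply functional_extensionality; intro x; apply functional_extensionality; intro y.

Lemma pdR_plus d f g : partially_differentiable f -> partially_differentiable g ->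
  pdR d (fun t x y => f t x y + g t x y) = fun t x y => pdR d f t x y + pdR d g t x y.
Proof.
  intros Hf Hg. fld_ext.
  specialize (Hf d t x y); specialize (Hg d t x y). rewrite ex_pdR_slice in Hf, Hg.
  rewrite !pdR_slice.
  replace (slice d (fun t x y => f t x y + g t x y) t x y)
    with (fun s => slice d f t x y s + slice d g t x y s) by now destruct d.
  now apply Derive_plus.
Qed.

Lemma pdR_mult d f g : partially_differentiable f -> partially_differentiable g ->
  pdR d (fun t x y => f t x y * g t x y)
  = fun t x y => pdR d f t x y * g t x y + f t x y * pdR d g t x y.
Proof.
  intros Hf Hg. fld_ext.
  specialize (Hf d t x y); specialize (Hg d t x y). rewrite ex_pdR_slice in Hf, Hg.
  rewrite !pdR_slice.
  replace (slice d (fun t x y => f t x y * g t x y) t x y)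
    with (fun s => slice d f t x y s * slice d g t x y s) by now destruct d.
  rewrite Derive_mult by assumption. now destruct d.
Qed.

Lemma pdR_opp d f : pdR d (fun t x y => - f t x y) = fun t x y => - pdR d f t x y.
Proof.
  fld_ext. rewrite !pdR_slice.
  replace (slice d (fun t x y => - f t x y) t x y)
    with (fun s => - slice d f t x y s) by now destruct d.
  apply Derive_opp.
Qed.

Lemma pdR_minus d f g : partially_differentiable f -> partially_differentiable g ->
  pdR d (fun t x y => f t x y - g t x y) = fun t x y => pdR d f t x y - pdR d g t x y.
Proof.
  intros Hf Hg. fld_ext. rewrite !pdR_slice.
  replace (slice d (fun t x y => f t x y - g t x y) t x y)
    with (fun s => slice d f t x y s - slice d g t x y s) by now destruct d.
  specialize (Hf d t x y); specialize (Hg d t x y). rewrite ex_pdR_slice in Hf, Hg.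
  rewrite Derive_minus by assumption. now destruct d.
Qed.

Lemma pdR_const d c : pdR d (fun _ _ _ => c) = fun _ _ _ => 0.
Proof. fld_ext. destruct d; simpl; apply Derive_const. Qed.

Definition kronecker (d d' : dir) : R :=
  match d, d' with Dt, Dt | D1, D1 | D2, D2 => 1 | _, _ => 0 end.

Lemma pdR_t d : pdR d (fun t _ _ => t) = fun _ _ _ => kronecker d Dt.
Proof. fld_ext. destruct d; simpl; [apply Derive_id | apply Derive_const ..]. Qed.

Lemma pdR_x d : pdR d (fun _ x _ => x) = fun _ _ _ => kronecker d D1.
Proof. fld_ext. destruct d; simpl; [apply Derive_const | apply Derive_id | apply Derive_const]. Qed.

Lemma pdR_y d : pdR d (fun _ _ y => y) = fun _ _ _ => kronecker d D2.
Proof. fld_ext. destruct d; simpl; [apply Derive_const .. | apply Derive_id]. Qed.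

Lemma partially_differentiable_plus f g :
  partially_differentiable f -> partially_differentiable g ->
  partially_differentiable (fun t x y => f t x y + g t x y).
Proof.
  intros Hf Hg d t x y. specialize (Hf d t x y); specialize (Hg d t x y).
  rewrite ex_pdR_slice in *.
  replace (slice d (fun t x y => f t x y + g t x y) t x y)
    with (fun s => slice d f t x y s + slice d g t x y s) by now destruct d.
  now apply (ex_derive_plus (slice d f t x y) (slice d g t x y)).
Qed.

Lemma partially_differentiable_mult f g :
  partially_differentiable f -> partially_differentiable g ->
  partially_differentiable (fun t x y => f t x y * g t x y).
Proof.
  intros Hf Hg d t x y. specialize (Hf d t x y); specialize (Hg d t x y).
  rewrite ex_pdR_slice in *.
  replace (slice d (fun t x y => f t x y * g t x y) t x y)
    with (fun s => slice d f t x y s * slice d g t x y s) by now destruct d.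
  now apply (ex_derive_mult (slice d f t x y) (slice d g t x y)).
Qed.

Lemma partially_differentiable_opp f :
  partially_differentiable f -> partially_differentiable (fun t x y => - f t x y).
Proof.
  intros Hf d t x y. specialize (Hf d t x y). rewrite ex_pdR_slice in *.
  replace (slice d (fun t x y => - f t x y) t x y)
    with (fun s => - slice d f t x y s) by now destruct d.
  now apply (ex_derive_opp (slice d f t x y)).
Qed.

Lemma smoothR_continuous3 f : smoothR f -> continuous3 f.
Proof. intros H t x y. exact (proj1 (H nil t x y)). Qed.

Lemma smoothR_partially_differentiable f : smoothR f -> partially_differentiable f.
Proof. intros H d t x y. exact (proj2 (H nil t x y) d). Qed.

Lemma smoothR_pdR d f : smoothR f -> smoothR (pdR d f).
Proof.
  intros H l t x y. specialize (H (l ++ d :: nil) t x y).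
  unfold iter_pdR in H. now rewrite fold_right_app in H.
Qed.

Lemma is_derive_pdR d f t x y : smoothR f ->
  is_derive (slice d f t x y) (coord d t x y) (pdR d f t x y).
Proof.
  intros H. rewrite pdR_slice. apply Derive_correct.
  rewrite <- ex_pdR_slice. apply smoothR_partially_differentiable, H.
Qed.

Lemma smoothR_of_class (P : fld R -> Prop) :
  (forall h, P h -> continuous3 h) -> (forall h, P h -> partially_differentiable h) ->
  (forall h d, P h -> P (pdR d h)) -> forall f, P f -> smoothR f.
Proof.
  intros Hcont Hdiff Hstable f Hf.
  assert (Hl : forall l, P (iter_pdR l f)) by (induction l; simpl; auto).
  intros l t x y. split; [apply Hcont | intro d; apply Hdiff]; apply Hl.
Qed.

Lemma smoothR_plus f g : smoothR f -> smoothR g -> smoothR (fun t x y => f t x y + g t x y).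
Proof.
  intros Hf Hg.
  apply (smoothR_of_class (fun h => exists f g, smoothR f /\ smoothR g /\
                                   h = fun t x y => f t x y + g t x y)).
  - intros h (f' & g' & H1 & H2 & ->).
    apply continuous3_plus; now apply smoothR_continuous3.
  - intros h (f' & g' & H1 & H2 & ->).
    apply partially_differentiable_plus; now apply smoothR_partially_differentiable.
  - intros h d (f' & g' & H1 & H2 & ->). exists (pdR d f'), (pdR d g').
    repeat split; try now apply smoothR_pdR.
    apply pdR_plus; now apply smoothR_partially_differentiable.
  - eauto.
Qed.

Lemma smoothR_opp f : smoothR f -> smoothR (fun t x y => - f t x y).
Proof.
  intros Hf.
  apply (smoothR_of_class (fun h => exists f, smoothR f /\ h = fun t x y => - f t x y)).
  - intros h (f' & H1 & ->). now apply continuous3_opp, smoothR_continuous3.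
  - intros h (f' & H1 & ->).
    now apply partially_differentiable_opp, smoothR_partially_differentiable.
  - intros h d (f' & H1 & ->). exists (pdR d f').
    split; [now apply smoothR_pdR | apply pdR_opp].
  - eauto.
Qed.

Inductive sum_of_products : fld R -> Prop :=
  | sum_of_products_mult f g : smoothR f -> smoothR g ->
      sum_of_products (fun t x y => f t x y * g t x y)
  | sum_of_products_plus h1 h2 : sum_of_products h1 -> sum_of_products h2 ->
      sum_of_products (fun t x y => h1 t x y + h2 t x y).

Lemma sum_of_products_continuous3 h : sum_of_products h -> continuous3 h.
Proof.
  induction 1; [apply continuous3_mult | apply continuous3_plus]; auto using smoothR_continuous3.
Qed.

Lemma sum_of_products_partially_differentiable h :
  sum_of_products h -> partially_differentiable h.
Proof.
  induction 1; [apply partially_differentiable_mult | apply partially_differentiable_plus];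
    auto using smoothR_partially_differentiable.
Qed.

Lemma sum_of_products_pdR h d : sum_of_products h -> sum_of_products (pdR d h).
Proof.
  induction 1 as [f g Hf Hg | h1 h2 H1 IH1 H2 IH2].
  - rewrite pdR_mult by now apply smoothR_partially_differentiable.
    apply sum_of_products_plus; apply sum_of_products_mult; auto using smoothR_pdR.
  - rewrite pdR_plus by now apply sum_of_products_partially_differentiable.
    now apply sum_of_products_plus.
Qed.

Lemma smoothR_mult f g : smoothR f -> smoothR g -> smoothR (fun t x y => f t x y * g t x y).
Proof.
  intros Hf Hg. apply (smoothR_of_class sum_of_products).
  - apply sum_of_products_continuous3.
  - apply sum_of_products_partially_differentiable.
  - intros; now apply sum_of_products_pdR.
  - now apply sum_of_products_mult.
Qed.

Lemma smoothR_const_or_coordinate h :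
  (exists c, h = fun _ _ _ => c) \/ h = (fun t _ _ => t) \/
  h = (fun _ x _ => x) \/ h = (fun _ _ y => y) ->
  smoothR h.
Proof.
  revert h. apply smoothR_of_class.
  - intros h [[c ->] | [-> | [-> | ->]]];
      auto using continuous3_const, continuous3_t, continuous3_x, continuous3_y.
  - intros h [[c ->] | [-> | [-> | ->]]] d t x y; rewrite ex_pdR_slice; destruct d; simpl;
      first [apply ex_derive_const | apply ex_derive_id].
  - intros h d [[c ->] | [-> | [-> | ->]]]; left.
    + exists 0; apply pdR_const.
    + exists (kronecker d Dt); apply pdR_t.
    + exists (kronecker d D1); apply pdR_x.
    + exists (kronecker d D2); apply pdR_y.
Qed.

Lemma smoothR_const c : smoothR (fun _ _ _ => c).
Proof. apply smoothR_const_or_coordinate; eauto. Qed.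

Lemma smoothR_t : smoothR (fun t _ _ => t).
Proof. apply smoothR_const_or_coordinate; eauto. Qed.

Lemma smoothR_x : smoothR (fun _ x _ => x).
Proof. apply smoothR_const_or_coordinate; eauto. Qed.

Lemma smoothR_y : smoothR (fun _ _ y => y).
Proof. apply smoothR_const_or_coordinate; eauto. Qed.

Lemma smoothR_minus f g : smoothR f -> smoothR g -> smoothR (fun t x y => f t x y - g t x y).
Proof. intros. apply (smoothR_plus f (fun t x y => - g t x y)), smoothR_opp; assumption. Qed.

Lemma continuity_2d_pt_tx f y u v : continuous3 f -> continuity_2d_pt (fun u v => f u v y) u v.
Proof.
  intros Hf. apply (continuity_2d_pt_comp3 f (fun u _ => u) (fun _ v => v) (fun _ _ => y));
    auto using continuity_2d_pt_id1, continuity_2d_pt_id2, continuity_2d_pt_const.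
Qed.

Lemma continuity_2d_pt_ty f x u v : continuous3 f -> continuity_2d_pt (fun u v => f u x v) u v.
Proof.
  intros Hf. apply (continuity_2d_pt_comp3 f (fun u _ => u) (fun _ _ => x) (fun _ v => v));
    auto using continuity_2d_pt_id1, continuity_2d_pt_id2, continuity_2d_pt_const.
Qed.

Lemma continuity_2d_pt_xy f t u v : continuous3 f -> continuity_2d_pt (fun u v => f t u v) u v.
Proof.
  intros Hf. apply (continuity_2d_pt_comp3 f (fun _ _ => t) (fun u _ => u) (fun _ v => v));
    auto using continuity_2d_pt_id1, continuity_2d_pt_id2, continuity_2d_pt_const.
Qed.

Lemma locally_2d_forall (P : R -> R -> Prop) x y : (forall u v, P u v) -> locally_2d P x y.
Proof. intros H. exists (mkposreal 1 Rlt_0_1). auto. Qed.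

Lemma continuous3_pdR2 d1 d2 f : smoothR f -> continuous3 (pdR d1 (pdR d2 f)).
Proof. intros Hf. now apply smoothR_continuous3, smoothR_pdR, smoothR_pdR. Qed.

Lemma pdR_comm_tx f t x y : smoothR f -> pdR Dt (pdR D1 f) t x y = pdR D1 (pdR Dt f) t x y.
Proof.
  intros Hf. apply (Schwarz (fun u v => f u v y) t x).
  - apply locally_2d_forall; intros u v; repeat split;
      [ apply (smoothR_partially_differentiable f Hf Dt)
      | apply (smoothR_partially_differentiable f Hf D1)
      | apply (smoothR_partially_differentiable (pdR D1 f) (smoothR_pdR D1 f Hf) Dt)
      | apply (smoothR_partially_differentiable (pdR Dt f) (smoothR_pdR Dt f Hf) D1) ].
  - exact (continuity_2d_pt_tx (pdR Dt (pdR D1 f)) y t x (continuous3_pdR2 Dt D1 f Hf)).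
  - exact (continuity_2d_pt_tx (pdR D1 (pdR Dt f)) y t x (continuous3_pdR2 D1 Dt f Hf)).
Qed.

Lemma pdR_comm_ty f t x y : smoothR f -> pdR Dt (pdR D2 f) t x y = pdR D2 (pdR Dt f) t x y.
Proof.
  intros Hf. apply (Schwarz (fun u v => f u x v) t y).
  - apply locally_2d_forall; intros u v; repeat split;
      [ apply (smoothR_partially_differentiable f Hf Dt)
      | apply (smoothR_partially_differentiable f Hf D2)
      | apply (smoothR_partially_differentiable (pdR D2 f) (smoothR_pdR D2 f Hf) Dt)
      | apply (smoothR_partially_differentiable (pdR Dt f) (smoothR_pdR Dt f Hf) D2) ].
  - exact (continuity_2d_pt_ty (pdR Dt (pdR D2 f)) x t y (continuous3_pdR2 Dt D2 f Hf)).
  - exact (continuity_2d_pt_ty (pdR D2 (pdR Dt f)) x t y (continuous3_pdR2 D2 Dt f Hf)).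
Qed.

Lemma pdR_comm_xy f t x y : smoothR f -> pdR D1 (pdR D2 f) t x y = pdR D2 (pdR D1 f) t x y.
Proof.
  intros Hf. apply (Schwarz (fun u v => f t u v) x y).
  - apply locally_2d_forall; intros u v; repeat split;
      [ apply (smoothR_partially_differentiable f Hf D1)
      | apply (smoothR_partially_differentiable f Hf D2)
      | apply (smoothR_partially_differentiable (pdR D2 f) (smoothR_pdR D2 f Hf) D1)
      | apply (smoothR_partially_differentiable (pdR D1 f) (smoothR_pdR D1 f Hf) D2) ].
  - exact (continuity_2d_pt_xy (pdR D1 (pdR D2 f)) t x y (continuous3_pdR2 D1 D2 f Hf)).
  - exact (continuity_2d_pt_xy (pdR D2 (pdR D1 f)) t x y (continuous3_pdR2 D2 D1 f Hf)).
Qed.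

Lemma pdR_comm f d1 d2 : smoothR f -> pdR d1 (pdR d2 f) = pdR d2 (pdR d1 f).
Proof.
  intros Hf. fld_ext.
  destruct d1, d2; auto using pdR_comm_tx, pdR_comm_ty, pdR_comm_xy, eq_sym.
Qed.

(** * One-variable calculus and parameter integrals *)

Lemma Rabs_lt_of_ball (x : R) (e : posreal) y : ball x e y -> Rabs (y - x) < e.
Proof. easy. Qed.

Lemma continuous_of_eps_delta (f : R -> R) x :
  (forall eps, 0 < eps -> exists d, 0 < d /\
     forall y, Rabs (y - x) < d -> Rabs (f y - f x) < eps) ->
  continuous f x.
Proof.
  intros H P [e HP]. destruct (H e (cond_pos e)) as [d [Hd Hy]].
  exists (mkposreal d Hd). intros y Hb. apply HP, Hy, Hb.
Qed.

Lemma eps_delta_of_continuous (f : R -> R) x : continuous f x ->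
  forall eps, 0 < eps -> exists d, 0 < d /\
    forall y, Rabs (y - x) < d -> Rabs (f y - f x) < eps.
Proof.
  intros H eps He.
  assert (Hloc : locally x (fun y => ball (f x) eps (f y))).
  { apply H. now exists (mkposreal eps He). }
  destruct Hloc as [d Hd]. exists d. split; [apply cond_pos | intros y Hy; apply Hd, Hy].
Qed.

Lemma Derive_ext_right (f g : R -> R) t0 : (forall s, t0 <= s -> f s = g s) ->
  ex_derive f t0 -> ex_derive g t0 -> Derive f t0 = Derive g t0.
Proof.
  intros H Hf Hg.
  apply Derive_correct, is_derive_Reals in Hf, Hg.
  set (lf := Derive f t0) in *. set (lg := Derive g t0) in *.
  destruct (Req_dec lf lg) as [|Hne]; auto. exfalso.
  set (e := Rabs (lf - lg) / 2).
  assert (He : 0 < e) by (apply Rdiv_lt_0_compat; [apply Rabs_pos_lt|]; lra).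
  destruct (Hf e He) as [df Hdf], (Hg e He) as [dg Hdg].
  set (h := Rmin df dg / 2).
  assert (Hh : 0 < h < df /\ h < dg).
  { pose proof (cond_pos df); pose proof (cond_pos dg).
    pose proof (Rmin_l df dg); pose proof (Rmin_r df dg).
    pose proof (Rmin_glb_lt df dg 0). unfold h. lra. }
  assert (A := Hdf h ltac:(lra) ltac:(rewrite Rabs_right; lra)).
  assert (B := Hdg h ltac:(lra) ltac:(rewrite Rabs_right; lra)).
  rewrite (H (t0 + h)), (H t0) in A by lra.
  set (q := (g (t0 + h) - g t0) / h) in *.
  assert (Rabs (lf - lg) <= Rabs (q - lg) + Rabs (q - lf)).
  { replace (lf - lg) with ((q - lg) - (q - lf)) by ring.
    eapply Rle_trans; [apply Rabs_triang | rewrite Rabs_Ropp; lra]. }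
  unfold e in *. lra.
Qed.

Lemma ex_RInt_continuous_R (g : R -> R) a b : (forall z, continuous g z) -> ex_RInt g a b.
Proof. intros H. apply (ex_RInt_continuous (V := R_CompleteNormedModule)). auto. Qed.

Lemma RInt_zero (a b : R) : RInt (fun _ => 0) a b = 0.
Proof. rewrite (RInt_const (V := R_CompleteNormedModule)). apply Rmult_0_r. Qed.

Lemma RInt_eq_0_nonneg (g : R -> R) a b y : a < y < b -> (forall z, continuous g z) ->
  (forall z, a <= z <= b -> 0 <= g z) -> RInt g a b = 0 -> g y = 0.
Proof.
  intros Hy Hc Hp H0.
  destruct (Rle_lt_or_eq_dec 0 (g y)) as [Hlt|]; [apply Hp; lra | exfalso | auto].
  destruct (eps_delta_of_continuous g y (Hc y) (g y / 2)) as [d [Hd Hdd]]; [lra|].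
  set (r := Rmin d (Rmin (y - a) (b - y)) / 2).
  assert (Hr : 0 < r /\ r < d /\ r < y - a /\ r < b - y).
  { pose proof (Rmin_l d (Rmin (y - a) (b - y))); pose proof (Rmin_r d (Rmin (y - a) (b - y))).
    pose proof (Rmin_l (y - a) (b - y)); pose proof (Rmin_r (y - a) (b - y)).
    assert (0 < Rmin d (Rmin (y - a) (b - y))) by (repeat apply Rmin_glb_lt; lra).
    unfold r. lra. }
  assert (Hsplit : RInt g a b = RInt g a (y - r) + (RInt g (y - r) (y + r) + RInt g (y + r) b)).
  { rewrite <- (RInt_Chasles g a (y - r) b), <- (RInt_Chasles g (y - r) (y + r) b);
      auto using ex_RInt_continuous_R. }
  assert (0 <= RInt g a (y - r)).
  { apply RInt_ge_0; [lra | now apply ex_RInt_continuous_R | intros; apply Hp; lra]. }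
  assert (0 <= RInt g (y + r) b).
  { apply RInt_ge_0; [lra | now apply ex_RInt_continuous_R | intros; apply Hp; lra]. }
  assert (0 < RInt g (y - r) (y + r)).
  { apply RInt_gt_0; [lra | | auto].
    intros z Hz. assert (Hgz : Rabs (g z - g y) < g y / 2) by (apply Hdd, Rabs_def1; lra).
    apply Rabs_def2 in Hgz. lra. }
  lra.
Qed.

Lemma continuous3_tube G p1 p2 a b : continuous3 G -> forall eps, 0 < eps -> exists d, 0 < d /\
  forall q1 q2 y, Rabs (q1 - p1) < d -> Rabs (q2 - p2) < d -> a <= y <= b ->
    Rabs (G q1 q2 y - G p1 p2 y) < eps.
Proof.
  intros HG eps He.
  assert (Hloc : forall y, exists d : posreal, forall q1 q2 z,
    Rabs (q1 - p1) < d -> Rabs (q2 - p2) < d -> Rabs (z - y) < d ->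
    Rabs (G q1 q2 z - G p1 p2 y) < eps / 2).
  { intros y.
    assert (Hb : locally (p1, p2, y) (fun q : R * R * R =>
              ball (G p1 p2 y) (eps / 2) (G (fst (fst q)) (snd (fst q)) (snd q)))).
    { apply (HG p1 p2 y). exists (mkposreal (eps / 2) ltac:(lra)). auto. }
    destruct Hb as [d Hd]. exists d. intros q1 q2 z H1 H2 H3.
    apply (Hd (q1, q2, z)). repeat split; assumption. }
  destruct (choice _ Hloc) as [delta Hdelta].
  destruct (compactness_value_1d a b delta) as [d Hcomp].
  exists d. split; [apply cond_pos|]. intros q1 q2 y H1 H2 Hy.
  destruct (Rlt_dec (Rabs (G q1 q2 y - G p1 p2 y)) eps) as [ok|ko]; auto. exfalso.
  apply (Hcomp y Hy). intros [s [Hs [Hys Hds]]]. apply ko.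
  assert (A1 : Rabs (G q1 q2 y - G p1 p2 s) < eps / 2) by (apply Hdelta; lra).
  assert (A2 : Rabs (G p1 p2 y - G p1 p2 s) < eps / 2).
  { pose proof (cond_pos (delta s)).
    apply Hdelta; try lra; rewrite Rminus_eq_0, Rabs_R0; lra. }
  replace (G q1 q2 y - G p1 p2 y) with ((G q1 q2 y - G p1 p2 s) - (G p1 p2 y - G p1 p2 s)) by ring.
  eapply Rle_lt_trans; [apply Rabs_triang | rewrite Rabs_Ropp; lra].
Qed.

Lemma ex_RInt_continuous3 G t x a b : continuous3 G -> ex_RInt (fun y => G t x y) a b.
Proof.
  intros HG. apply (ex_RInt_continuous (V := R_CompleteNormedModule)).
  intros z _. now apply continuous3_slice_y.
Qed.

Lemma continuity_2d_pt_RInt_param G a b p1 p2 : a <= b -> continuous3 G ->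
  continuity_2d_pt (fun q1 q2 => RInt (fun y => G q1 q2 y) a b) p1 p2.
Proof.
  intros Hab HG eps.
  assert (He : 0 < eps / (b - a + 1)) by (apply Rdiv_lt_0_compat; [apply cond_pos | lra]).
  destruct (continuous3_tube G p1 p2 a b HG _ He) as [d [Hd Ht]].
  exists (mkposreal d Hd). intros q1 q2 H1 H2. simpl.
  rewrite <- (RInt_minus (V := R_CompleteNormedModule)) by now apply ex_RInt_continuous3.
  eapply Rle_lt_trans.
  - apply abs_RInt_le_const with (M := eps / (b - a + 1)); auto.
    + apply (ex_RInt_minus (V := R_NormedModule)); now apply ex_RInt_continuous3.
    + intros y Hy. left. now apply Ht.
  - apply Rlt_le_trans with ((b - a + 1) * (eps / (b - a + 1))).
    + apply Rmult_lt_compat_r; auto; lra.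
    + right. field. lra.
Qed.

Lemma continuity_2d_pt_continuous_l f u v : continuity_2d_pt f u v -> continuous (fun s => f s v) u.
Proof.
  intros H. apply continuous_of_eps_delta. intros eps He.
  destruct (H (mkposreal eps He)) as [d Hd].
  exists d; split; [apply cond_pos|]. intros y Hy. apply Hd; auto.
  rewrite Rminus_eq_0, Rabs_R0. apply cond_pos.
Qed.

Lemma is_derive_RInt_param_continuous (f df : R -> R -> R) a b t :
  (forall u, ex_RInt (fun y => f u y) a b) -> (forall u v, continuity_2d_pt df u v) ->
  (forall u v, is_derive (fun s => f s v) u (df u v)) ->
  is_derive (fun s => RInt (fun y => f s y) a b) t (RInt (fun y => df t y) a b).
Proof.
  intros Hf Hdf Hd.
  assert (E : forall u v, Derive (fun s => f s v) u = df u v)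
    by (intros; now apply is_derive_unique).
  rewrite <- (RInt_ext (fun y => Derive (fun u => f u y) t)) by auto.
  apply (is_derive_RInt_param f a b t).
  - apply filter_forall. intros s y _. now exists (df s y).
  - intros y _. apply (continuity_2d_pt_ext df); auto.
  - now apply filter_forall.
Qed.

Lemma continuous_RInt_param G t x c d : c <= d -> continuous3 G ->
  continuous (fun x => RInt (fun y => G t x y) c d) x.
Proof.
  intros Hcd HG.
  apply (continuity_2d_pt_continuous_l (fun q1 q2 => RInt (fun y => G q2 q1 y) c d)).
  apply continuity_2d_pt_RInt_param; auto.
  apply (continuous3_comp3 G (fun _ x _ => x) (fun t _ _ => t) (fun _ _ y => y));
    auto using continuous3_x, continuous3_t, continuous3_y.
Qed.

Lemma RInt_Rplus (f g : R -> R) a b : ex_RInt f a b -> ex_RInt g a b ->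
  RInt (fun x => f x + g x) a b = RInt f a b + RInt g a b.
Proof. apply (RInt_plus (V := R_CompleteNormedModule)). Qed.

Lemma is_derive_eq (f : R -> R) (x l l' : R) : is_derive f x l -> l = l' -> is_derive f x l'.
Proof. now intros H <-. Qed.

Lemma is_derive_Rconst (c x : R) : is_derive (fun _ => c) x 0.
Proof. apply (is_derive_const (K := R_AbsRing) (V := R_NormedModule)). Qed.

Lemma is_derive_Rmult (f g : R -> R) x df dg : is_derive f x df -> is_derive g x dg ->
  is_derive (fun s => f s * g s) x (df * g x + f x * dg).
Proof. intros Hf Hg. apply (is_derive_mult f g x df dg Hf Hg), Rmult_comm. Qed.

Lemma is_derive_Rplus (f g : R -> R) x df dg : is_derive f x df -> is_derive g x dg ->
  is_derive (fun s => f s + g s) x (df + dg).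
Proof. apply (is_derive_plus (K := R_AbsRing) (V := R_NormedModule)). Qed.

Ltac derive_rules := repeat (cbv beta; match goal with
  | |- is_derive (fun s => @?f s * @?g s) _ _ => apply (is_derive_Rmult f g)
  | |- is_derive (fun s => @?f s + @?g s) _ _ => apply (is_derive_Rplus f g)
  | |- is_derive (fun _ => ?c) _ _ => apply is_derive_Rconst
  end).

(** * Uniqueness for the wave equation *)

Definition hinge2 (M z : R) : R := (Rmax 0 (M - z)) ^ 2.
Definition hinge2' (M z : R) : R := -2 * Rmax 0 (M - z).

Lemma is_derive_Rmax0_sqr w : is_derive (fun z => (Rmax 0 z) ^ 2) w (2 * Rmax 0 w).
Proof.
  destruct (Rtotal_order w 0) as [Hn | [-> | Hp]].
  - rewrite Rmax_left by lra. replace (2 * 0) with 0 by ring.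
    apply (is_derive_ext_loc (fun _ => 0)).
    + exists (mkposreal (- w) ltac:(lra)). intros y Hy. apply Rabs_lt_of_ball, Rabs_def2 in Hy.
      simpl in Hy. rewrite Rmax_left by lra. simpl; ring.
    + apply (is_derive_const (K := R_AbsRing) (V := R_NormedModule)).
  - rewrite Rmax_left by lra. apply is_derive_Reals. intros eps He.
    exists (mkposreal eps He). intros h Hh0 Hh. rewrite Rplus_0_l, (Rmax_left 0 0) by lra.
    unfold Rmax; destruct Rle_dec.
    + replace ((h ^ 2 - 0 ^ 2) / h - 2 * 0) with h by (field; auto). exact Hh.
    + replace ((0 ^ 2 - 0 ^ 2) / h - 2 * 0) with 0 by (field; auto). now rewrite Rabs_R0.
  - rewrite Rmax_right by lra.
    apply (is_derive_ext_loc (fun z => z ^ 2)).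
    + exists (mkposreal w ltac:(lra)). intros y Hy. apply Rabs_lt_of_ball, Rabs_def2 in Hy.
      simpl in Hy. now rewrite Rmax_right by lra.
    + replace (2 * w) with (INR 2 * 1 * w ^ (pred 2)) by (simpl; ring).
      apply (is_derive_pow (fun z => z) 2 w 1), (is_derive_id (K := R_AbsRing)).
Qed.

Lemma continuous_Rmax0 z : continuous (fun w => Rmax 0 w) z.
Proof.
  apply continuous_of_eps_delta. intros eps He. exists eps. split; auto. intros y Hy.
  apply Rabs_def2 in Hy. apply Rabs_def1; unfold Rmax; repeat destruct Rle_dec; lra.
Qed.

Lemma continuous_hinge2 M z : continuous (hinge2 M) z.
Proof.
  apply (continuous_comp (fun z => M - z) (fun w => Rmax 0 w ^ 2)).
  - apply (continuous_minus (V := R_NormedModule) (fun _ => M) (fun z => z));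
      [apply continuous_const | apply continuous_id].
  - apply (ex_derive_continuous (fun w => Rmax 0 w ^ 2)). eexists; apply is_derive_Rmax0_sqr.
Qed.

Lemma continuous_hinge2' M z : continuous (hinge2' M) z.
Proof.
  apply (continuous_comp (fun z => Rmax 0 (M - z)) (fun w => -2 * w)).
  - apply (continuous_comp (fun z => M - z) (fun w => Rmax 0 w)), continuous_Rmax0.
    apply (continuous_minus (V := R_NormedModule) (fun _ => M) (fun z => z));
      [apply continuous_const | apply continuous_id].
  - apply (continuous_scal_r (K := R_AbsRing) (V := R_NormedModule) (-2) (fun w => w)),
      continuous_id.
Qed.

Lemma is_derive_hinge2 M (g : R -> R) s dg : is_derive g s dg ->
  is_derive (fun s => hinge2 M (g s)) s (hinge2' M (g s) * dg).
Proof.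
  intros Hg. unfold hinge2, hinge2'.
  replace (-2 * Rmax 0 (M - g s) * dg) with (scal (0 - dg) (2 * Rmax 0 (M - g s)))
    by (unfold scal; simpl; unfold mult; simpl; ring).
  apply (is_derive_comp (fun w => Rmax 0 w ^ 2) (fun s => M - g s) s);
    [apply is_derive_Rmax0_sqr
    | apply (is_derive_minus (V := R_NormedModule) (fun _ => M) g s 0 dg)];
    [apply (is_derive_const (K := R_AbsRing) (V := R_NormedModule)) | exact Hg].
Qed.

Lemma hinge2_nonneg M z : 0 <= hinge2 M z.
Proof. apply pow2_ge_0. Qed.

Lemma continuous3_pdR d f : smoothR f -> continuous3 (pdR d f).
Proof. intros Hf. now apply smoothR_continuous3, smoothR_pdR. Qed.

Ltac smoothR_iterated_pdR :=
  repeat match goal with |- smoothR (pdR ?d ?f) => apply (smoothR_pdR d f) end; assumption.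

Ltac solve_continuous3 := repeat (cbv beta; match goal with
  | |- continuous3 (fun t x y => @?f t x y + @?g t x y) => apply (continuous3_plus f g)
  | |- continuous3 (fun t x y => @?f t x y - @?g t x y) => apply (continuous3_minus f g)
  | |- continuous3 (fun t x y => @?f t x y * @?g t x y) => apply (continuous3_mult f g)
  | |- continuous3 (fun t x y => @?f t x y / ?c) => apply (continuous3_mult f (fun _ _ _ => / c))
  | |- continuous3 (fun t x y => - @?f t x y) => apply (continuous3_opp f)
  | |- continuous3 (fun t x y => hinge2 ?M (@?e t x y)) =>
      apply (continuous3_comp (hinge2 M) e (continuous_hinge2 M))
  | |- continuous3 (fun t x y => hinge2' ?M (@?e t x y)) =>
      apply (continuous3_comp (hinge2' M) e (continuous_hinge2' M))
  | |- continuous3 (fun t x y => pdR ?d ?f t x y) =>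
      apply (continuous3_pdR d f); smoothR_iterated_pdR
  | |- continuous3 (fun t _ _ => t) => apply continuous3_t
  | |- continuous3 (fun _ x _ => x) => apply continuous3_x
  | |- continuous3 (fun _ _ y => y) => apply continuous3_y
  | |- continuous3 (fun _ _ _ => ?c) => apply (continuous3_const c)
  | |- continuous3 _ => assumption
  end).

Lemma product_le_energy (w p q : R) : Rabs (w * p) <= / 2 * (w * w + p * p + q * q).
Proof.
  pose proof (Rle_0_sqr (w - p)); pose proof (Rle_0_sqr (w + p)); pose proof (Rle_0_sqr q).
  unfold Rsqr in *. unfold Rabs; destruct Rcase_abs; lra.
Qed.

Lemma weighted_flux_nonpos (P T X w p q : R) : 0 <= P -> T <= - Rabs X ->
  P * (/ 2 * (w * w + p * p + q * q) * T - w * p * X) <= 0.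
Proof.
  intros HP HT.
  pose proof (product_le_energy w p q).
  assert (- (w * p * X) <= Rabs (w * p) * Rabs X).
  { rewrite <- Rabs_mult, <- Rabs_Ropp. apply Rle_abs. }
  pose proof (Rabs_pos X).
  apply Rmult_le_0_l; nra.
Qed.

Section WaveEnergy.

Variable u : fld R.
Variables M a b : R.
Hypothesis Hu : smoothR u.
Hypothesis HM : 0 < M.

Local Notation ut := (pdR Dt u).
Local Notation u1 := (pdR D1 u).
Local Notation u2 := (pdR D2 u).

(* For [t >= 0] the weight is supported in the box [|x1 - a|, |x2 - b| <= 2 M], where the
   slope [|x - c| / (2 M)] of the level sets of [level] is at most 1: they are spacelike, so
   [hinge2'_level_dominates] holds and the energy cannot increase. *)
Definition level (t x c : R) : R := t + (x - c) * (x - c) / (4 * M).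

Definition weight (t x1 x2 : R) : R := hinge2 M (level t x1 a) * hinge2 M (level t x2 b).
Definition weight_t (t x1 x2 : R) : R :=
  hinge2' M (level t x1 a) * hinge2 M (level t x2 b)
  + hinge2 M (level t x1 a) * hinge2' M (level t x2 b).
Definition weight_1 (t x1 x2 : R) : R :=
  hinge2' M (level t x1 a) * ((x1 - a) / (2 * M)) * hinge2 M (level t x2 b).
Definition weight_2 (t x1 x2 : R) : R :=
  hinge2 M (level t x1 a) * (hinge2' M (level t x2 b) * ((x2 - b) / (2 * M))).

Lemma is_derive_level_x t x c : is_derive (fun s => level t s c) x ((x - c) / (2 * M)).
Proof. unfold level. auto_derive; [easy | field; lra]. Qed.

Lemma is_derive_level_t t x c : is_derive (fun s => level s x c) t 1.
Proof. unfold level. auto_derive; [easy | ring]. Qed.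

Lemma is_derive_weight_t t x1 x2 : is_derive (fun s => weight s x1 x2) t (weight_t t x1 x2).
Proof.
  eapply is_derive_eq; [unfold weight; derive_rules |].
  - apply (is_derive_hinge2 M (fun s => level s x1 a)), is_derive_level_t.
  - apply (is_derive_hinge2 M (fun s => level s x2 b)), is_derive_level_t.
  - unfold weight_t; ring.
Qed.

Lemma is_derive_weight_1 t x1 x2 : is_derive (fun s => weight t s x2) x1 (weight_1 t x1 x2).
Proof.
  eapply is_derive_eq; [unfold weight; derive_rules |].
  - apply (is_derive_hinge2 M (fun s => level t s a)), is_derive_level_x.
  - unfold weight_1; ring.
Qed.

Lemma is_derive_weight_2 t x1 x2 : is_derive (fun s => weight t x1 s) x2 (weight_2 t x1 x2).
Proof.
  eapply is_derive_eq; [unfold weight; derive_rules |].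
  - apply (is_derive_hinge2 M (fun s => level t s b)), is_derive_level_x.
  - unfold weight_2; ring.
Qed.

Definition energy_density (t x y : R) : R :=
  / 2 * (ut t x y * ut t x y + u1 t x y * u1 t x y + u2 t x y * u2 t x y).
Definition density (t x y : R) : R := energy_density t x y * weight t x y.
Definition density_t (t x y : R) : R :=
  (ut t x y * pdR Dt ut t x y + u1 t x y * pdR Dt u1 t x y + u2 t x y * pdR Dt u2 t x y)
    * weight t x y
  + energy_density t x y * weight_t t x y.
Definition flux1 (t x y : R) : R := ut t x y * u1 t x y * weight t x y.
Definition flux1_x (t x y : R) : R :=
  (pdR D1 ut t x y * u1 t x y + ut t x y * pdR D1 u1 t x y) * weight t x y
  + ut t x y * u1 t x y * weight_1 t x y.
Definition flux2 (t x y : R) : R := ut t x y * u2 t x y * weight t x y.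
Definition flux2_y (t x y : R) : R :=
  (pdR D2 ut t x y * u2 t x y + ut t x y * pdR D2 u2 t x y) * weight t x y
  + ut t x y * u2 t x y * weight_2 t x y.
Definition dissipation (t x y : R) : R :=
  energy_density t x y * weight_t t x y
  - ut t x y * u1 t x y * weight_1 t x y - ut t x y * u2 t x y * weight_2 t x y.

Lemma is_derive_density t x y : is_derive (fun s => density s x y) t (density_t t x y).
Proof.
  eapply is_derive_eq; [unfold density, energy_density; derive_rules |].
  - apply (is_derive_pdR Dt ut); auto using smoothR_pdR.
  - apply (is_derive_pdR Dt ut); auto using smoothR_pdR.
  - apply (is_derive_pdR Dt u1); auto using smoothR_pdR.
  - apply (is_derive_pdR Dt u1); auto using smoothR_pdR.
  - apply (is_derive_pdR Dt u2); auto using smoothR_pdR.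
  - apply (is_derive_pdR Dt u2); auto using smoothR_pdR.
  - apply is_derive_weight_t.
  - unfold density_t, energy_density; field.
Qed.

Lemma is_derive_flux1 t x y : is_derive (fun s => flux1 t s y) x (flux1_x t x y).
Proof.
  unfold flux1, flux1_x. derive_rules.
  - apply (is_derive_pdR D1 ut); auto using smoothR_pdR.
  - apply (is_derive_pdR D1 u1); auto using smoothR_pdR.
  - apply is_derive_weight_1.
Qed.

Lemma is_derive_flux2 t x y : is_derive (fun s => flux2 t x s) y (flux2_y t x y).
Proof.
  unfold flux2, flux2_y. derive_rules.
  - apply (is_derive_pdR D2 ut); auto using smoothR_pdR.
  - apply (is_derive_pdR D2 u2); auto using smoothR_pdR.
  - apply is_derive_weight_2.
Qed.

Lemma density_t_balance t x y : boxR u t x y = 0 ->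
  density_t t x y = flux1_x t x y + flux2_y t x y + dissipation t x y.
Proof.
  intros Hbox. cbv beta iota delta [boxR sumR eta] in Hbox.
  unfold density_t, flux1_x, flux2_y, dissipation.
  rewrite (pdR_comm u Dt D1), (pdR_comm u Dt D2) by assumption.
  replace (pdR Dt (pdR Dt u) t x y)
    with (pdR D1 (pdR D1 u) t x y + pdR D2 (pdR D2 u) t x y) by lra.
  ring.
Qed.

Lemma continuous3_weight : continuous3 weight.
Proof. unfold weight, level. solve_continuous3. Qed.

Lemma continuous3_weight_t : continuous3 weight_t.
Proof. unfold weight_t, level. solve_continuous3. Qed.

Lemma continuous3_weight_1 : continuous3 weight_1.
Proof. unfold weight_1, level. solve_continuous3. Qed.

Lemma continuous3_weight_2 : continuous3 weight_2.
Proof. unfold weight_2, level. solve_continuous3. Qed.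

Lemma continuous3_energy_density : continuous3 energy_density.
Proof. unfold energy_density. solve_continuous3. Qed.

Ltac continuity_of_weighted :=
  pose proof continuous3_weight; pose proof continuous3_weight_t;
  pose proof continuous3_weight_1; pose proof continuous3_weight_2;
  pose proof continuous3_energy_density; solve_continuous3.

Lemma continuous3_density : continuous3 density.
Proof. unfold density. continuity_of_weighted. Qed.

Lemma continuous3_density_t : continuous3 density_t.
Proof. unfold density_t. continuity_of_weighted. Qed.

Lemma continuous3_flux1 : continuous3 flux1.
Proof. unfold flux1. continuity_of_weighted. Qed.

Lemma continuous3_flux1_x : continuous3 flux1_x.
Proof. unfold flux1_x. continuity_of_weighted. Qed.

Lemma continuous3_flux2_y : continuous3 flux2_y.
Proof. unfold flux2_y. continuity_of_weighted. Qed.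

Lemma continuous3_dissipation : continuous3 dissipation.
Proof. unfold dissipation. continuity_of_weighted. Qed.

Lemma hinge2'_level_dominates t x c : 0 <= t ->
  hinge2' M (level t x c) <= - Rabs (hinge2' M (level t x c) * ((x - c) / (2 * M))).
Proof.
  intros Ht. unfold hinge2'.
  set (m := Rmax 0 (M - level t x c)).
  assert (Hm : m = 0 \/ 0 <= m /\ Rabs (x - c) <= 2 * M).
  { unfold m, Rmax. destruct Rle_dec as [Hle|]; [right | now left]. split; [lra|].
    unfold level in Hle.
    assert (Hsq : (x - c) * (x - c) <= (2 * M) * (2 * M)).
    { apply (Rmult_le_reg_r (/ (4 * M))); [apply Rinv_0_lt_compat; lra|].
      replace (2 * M * (2 * M) * / (4 * M)) with M by (field; lra). unfold Rdiv in Hle. lra. }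
    apply Rsqr_le_abs_0 in Hsq. rewrite (Rabs_right (2 * M)) in Hsq by lra. exact Hsq. }
  destruct Hm as [-> | [Hm Hxc]].
  - rewrite !Rmult_0_r, Rmult_0_l, Rabs_R0. lra.
  - rewrite !Rabs_mult, Rabs_left, (Rabs_right m), Rabs_div, (Rabs_right (2 * M)) by lra.
    assert (Rabs (x - c) / (2 * M) <= 1).
    { apply (Rmult_le_reg_r (2 * M)); [lra|]. unfold Rdiv.
      rewrite Rmult_assoc, Rinv_l by lra. lra. }
    nra.
Qed.

Lemma dissipation_nonpos t x y : 0 <= t -> dissipation t x y <= 0.
Proof.
  intros Ht.
  assert (E : dissipation t x y =
    hinge2 M (level t y b) * (energy_density t x y * hinge2' M (level t x a)
      - ut t x y * u1 t x y * (hinge2' M (level t x a) * ((x - a) / (2 * M))))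
    + hinge2 M (level t x a) * (energy_density t x y * hinge2' M (level t y b)
      - ut t x y * u2 t x y * (hinge2' M (level t y b) * ((y - b) / (2 * M))))).
  { unfold dissipation, weight_t, weight_1, weight_2. ring. }
  rewrite E.
  assert (H1 := weighted_flux_nonpos _ _ _ (ut t x y) (u1 t x y) (u2 t x y)
    (hinge2_nonneg M (level t y b)) (hinge2'_level_dominates t x a Ht)).
  assert (H2 := weighted_flux_nonpos _ _ _ (ut t x y) (u2 t x y) (u1 t x y)
    (hinge2_nonneg M (level t x a)) (hinge2'_level_dominates t y b Ht)).
  unfold energy_density in *. lra.
Qed.

Lemma hinge2_level_edge t x c : 0 <= t -> x = c + 2 * M \/ x = c - 2 * M ->
  hinge2 M (level t x c) = 0.
Proof.
  intros Ht Hx. unfold hinge2, level.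
  replace ((x - c) * (x - c) / (4 * M)) with M by (destruct Hx as [-> | ->]; field; lra).
  rewrite Rmax_left by lra. ring.
Qed.

Lemma flux1_edge t x y : 0 <= t -> x = a + 2 * M \/ x = a - 2 * M -> flux1 t x y = 0.
Proof. intros Ht Hx. unfold flux1, weight. rewrite hinge2_level_edge by auto. ring. Qed.

Lemma flux2_edge t x y : 0 <= t -> y = b + 2 * M \/ y = b - 2 * M -> flux2 t x y = 0.
Proof. intros Ht Hy. unfold flux2, weight. rewrite (hinge2_level_edge t y) by auto. ring. Qed.

Definition energy (t : R) : R :=
  RInt (fun x1 => RInt (fun x2 => density t x1 x2) (b - 2 * M) (b + 2 * M))
    (a - 2 * M) (a + 2 * M).
Definition energy_t (t : R) : R :=
  RInt (fun x1 => RInt (fun x2 => density_t t x1 x2) (b - 2 * M) (b + 2 * M))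
    (a - 2 * M) (a + 2 * M).

Lemma is_derive_energy t : is_derive energy t (energy_t t).
Proof.
  apply (is_derive_RInt_param_continuous
           (fun s x1 => RInt (fun x2 => density s x1 x2) (b - 2 * M) (b + 2 * M))
           (fun s x1 => RInt (fun x2 => density_t s x1 x2) (b - 2 * M) (b + 2 * M))).
  - intros s. apply ex_RInt_continuous_R. intros x1.
    apply continuous_RInt_param; [lra | apply continuous3_density].
  - intros s x1. apply continuity_2d_pt_RInt_param; [lra | apply continuous3_density_t].
  - intros s x1.
    apply (is_derive_RInt_param_continuous (fun s y => density s x1 y)
                                           (fun s y => density_t s x1 y)).
    + intros; apply ex_RInt_continuous3, continuous3_density.
    + intros u0 v0. apply (continuity_2d_pt_ty density_t x1), continuous3_density_t.
    + intros; apply is_derive_density.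
Qed.

Lemma RInt_flux2_y t x : 0 <= t -> RInt (fun y => flux2_y t x y) (b - 2 * M) (b + 2 * M) = 0.
Proof.
  intros Ht. apply is_RInt_unique.
  replace 0 with (minus (flux2 t x (b + 2 * M)) (flux2 t x (b - 2 * M)))
    by (rewrite !flux2_edge by (auto; lra); apply Rminus_diag_eq; reflexivity).
  apply (is_RInt_derive (V := R_CompleteNormedModule) (fun y => flux2 t x y)).
  - intros; apply is_derive_flux2.
  - intros; apply continuous3_slice_y, continuous3_flux2_y.
Qed.

(* Differentiating under the integral sign, the inner integral of [flux1_x] is the
   [x]-derivative of that of [flux1], which vanishes at the edges. *)
Lemma RInt_RInt_flux1_x t : 0 <= t ->
  RInt (fun x => RInt (fun y => flux1_x t x y) (b - 2 * M) (b + 2 * M)) (a - 2 * M) (a + 2 * M) = 0.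
Proof.
  intros Ht. set (F x := RInt (fun y => flux1 t x y) (b - 2 * M) (b + 2 * M)).
  assert (Hedge : forall x, x = a + 2 * M \/ x = a - 2 * M -> F x = 0).
  { intros x Hx. rewrite <- (RInt_zero (b - 2 * M) (b + 2 * M)).
    apply RInt_ext. intros; now apply flux1_edge. }
  apply is_RInt_unique.
  replace 0 with (minus (F (a + 2 * M)) (F (a - 2 * M))).
  - apply (is_RInt_derive (V := R_CompleteNormedModule) F).
    + intros x _. apply (is_derive_RInt_param_continuous (fun s y => flux1 t s y)
                                                         (fun s y => flux1_x t s y)).
      * intros; apply ex_RInt_continuous3, continuous3_flux1.
      * intros u0 v0. apply (continuity_2d_pt_xy flux1_x t), continuous3_flux1_x.
      * intros; apply is_derive_flux1.
    + intros x _. apply continuous_RInt_param; [lra | apply continuous3_flux1_x].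
  - rewrite !Hedge by lra. apply Rminus_diag_eq; reflexivity.
Qed.

Lemma RInt_density_t t x : 0 <= t -> (forall y, boxR u t x y = 0) ->
  RInt (fun y => density_t t x y) (b - 2 * M) (b + 2 * M)
  = RInt (fun y => flux1_x t x y) (b - 2 * M) (b + 2 * M)
    + RInt (fun y => dissipation t x y) (b - 2 * M) (b + 2 * M).
Proof.
  intros Ht Hbox.
  rewrite (RInt_ext _ (fun y => flux1_x t x y + flux2_y t x y + dissipation t x y))
    by (intros; now apply density_t_balance).
  pose proof (ex_RInt_continuous3 _ t x (b - 2 * M) (b + 2 * M) continuous3_flux1_x) as E1.
  pose proof (ex_RInt_continuous3 _ t x (b - 2 * M) (b + 2 * M) continuous3_flux2_y) as E2.
  pose proof (ex_RInt_continuous3 _ t x (b - 2 * M) (b + 2 * M) continuous3_dissipation) as E3.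
  rewrite (RInt_Rplus (fun y => flux1_x t x y + flux2_y t x y) (fun y => dissipation t x y)),
    (RInt_Rplus (fun y => flux1_x t x y) (fun y => flux2_y t x y)) by
    first [exact E1 | exact E2 | exact E3
          | exact (ex_RInt_plus (V := R_CompleteNormedModule) _ _ _ _ E1 E2)].
  now rewrite RInt_flux2_y, Rplus_0_r.
Qed.

Lemma energy_t_nonpos t : 0 <= t -> (forall x y, boxR u t x y = 0) -> energy_t t <= 0.
Proof.
  intros Ht Hbox.
  assert (Hex : forall G, continuous3 G ->
            ex_RInt (fun x => RInt (fun y => G t x y) (b - 2 * M) (b + 2 * M))
              (a - 2 * M) (a + 2 * M)).
  { intros G HG. apply ex_RInt_continuous_R. intros; apply continuous_RInt_param; auto; lra. }
  unfold energy_t. rewrite (RInt_ext _ _ _ _ (fun x _ => RInt_density_t t x Ht (Hbox x))).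
  rewrite (RInt_Rplus (fun x => RInt (fun y => flux1_x t x y) (b - 2 * M) (b + 2 * M))
                      (fun x => RInt (fun y => dissipation t x y) (b - 2 * M) (b + 2 * M)))
    by auto using continuous3_flux1_x, continuous3_dissipation.
  rewrite RInt_RInt_flux1_x, Rplus_0_l by assumption.
  rewrite <- (RInt_zero (a - 2 * M) (a + 2 * M)).
  apply RInt_le; [lra | auto using continuous3_dissipation | apply ex_RInt_const |].
  intros x _. rewrite <- (RInt_zero (b - 2 * M) (b + 2 * M)).
  apply RInt_le; [lra | apply ex_RInt_continuous3, continuous3_dissipation | apply ex_RInt_const |].
  intros y _. now apply dissipation_nonpos.
Qed.

Lemma density_nonneg t x y : 0 <= density t x y.
Proof.
  apply Rmult_le_pos; [| apply Rmult_le_pos; apply hinge2_nonneg].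
  unfold energy_density.
  pose proof (Rle_0_sqr (ut t x y)); pose proof (Rle_0_sqr (u1 t x y));
    pose proof (Rle_0_sqr (u2 t x y)). unfold Rsqr in *. lra.
Qed.

Lemma RInt_density_nonneg t x : 0 <= RInt (fun y => density t x y) (b - 2 * M) (b + 2 * M).
Proof.
  apply RInt_ge_0; [lra | apply ex_RInt_continuous3, continuous3_density |].
  intros; apply density_nonneg.
Qed.

Lemma energy_nonneg t : 0 <= energy t.
Proof.
  apply RInt_ge_0; [lra | | intros; apply RInt_density_nonneg].
  apply ex_RInt_continuous_R; intros; apply continuous_RInt_param;
    [lra | apply continuous3_density].
Qed.

Hypothesis Hbox : forall t x y, 0 <= t -> boxR u t x y = 0.
Hypothesis Hu0 : forall x y, u 0 x y = 0.
Hypothesis Hut0 : forall x y, ut 0 x y = 0.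

Lemma density_0 x y : density 0 x y = 0.
Proof.
  unfold density, energy_density.
  assert (Hx : u1 0 x y = 0).
  { simpl. rewrite (Derive_ext _ (fun _ => 0)); [apply Derive_const | auto]. }
  assert (Hy : u2 0 x y = 0).
  { simpl. rewrite (Derive_ext _ (fun _ => 0)); [apply Derive_const | auto]. }
  rewrite Hut0, Hx, Hy. ring.
Qed.

Lemma energy_0 : energy 0 = 0.
Proof.
  unfold energy. rewrite (RInt_ext _ (fun _ => 0)); [apply RInt_zero|].
  intros x _. rewrite (RInt_ext _ (fun _ => 0)); [apply RInt_zero|].
  intros y _. apply density_0.
Qed.

Lemma energy_vanishes t : 0 <= t -> energy t = 0.
Proof.
  intros [Ht | <-]; [| apply energy_0].
  destruct (MVT_gen energy 0 t energy_t) as [c [Hc Heq]].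
  - intros; apply is_derive_energy.
  - intros x _. apply continuity_pt_filterlim, (ex_derive_continuous energy).
    eexists; apply is_derive_energy.
  - rewrite Rmin_left, Rmax_right in Hc by lra.
    assert (energy_t c <= 0) by (apply energy_t_nonpos; intros; try apply Hbox; lra).
    pose proof energy_0. pose proof (energy_nonneg t).
    assert (energy_t c * (t - 0) <= 0) by (apply Rmult_le_0_r; lra).
    lra.
Qed.

Lemma pdR_t_center_vanishes t : 0 <= t < M -> ut t a b = 0.
Proof.
  intros Ht.
  assert (Hin : RInt (fun y => density t a y) (b - 2 * M) (b + 2 * M) = 0).
  { apply (RInt_eq_0_nonneg (fun x => RInt (fun y => density t x y) (b - 2 * M) (b + 2 * M))
             (a - 2 * M) (a + 2 * M)); [lra | | | apply energy_vanishes; lra].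
    - intros; apply continuous_RInt_param; [lra | apply continuous3_density].
    - intros; apply RInt_density_nonneg. }
  assert (Hd : density t a b = 0).
  { apply (RInt_eq_0_nonneg (fun y => density t a y) (b - 2 * M) (b + 2 * M)); auto; try lra.
    - intros; apply continuous3_slice_y, continuous3_density.
    - intros; apply density_nonneg. }
  assert (Hw : 0 < weight t a b).
  { unfold weight, level, hinge2. rewrite !Rminus_eq_0, Rmult_0_l, Rdiv_0_l, Rplus_0_r.
    rewrite Rmax_right by lra. assert (0 < (M - t) ^ 2) by (apply pow_lt; lra). nra. }
  unfold density, energy_density in Hd.
  pose proof (Rle_0_sqr (ut t a b)); pose proof (Rle_0_sqr (u1 t a b));
    pose proof (Rle_0_sqr (u2 t a b)). unfold Rsqr in *.
  assert (Hsum : ut t a b * ut t a b = 0) by nra.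
  now apply Rmult_integral in Hsum as [|].
Qed.

End WaveEnergy.

Theorem wave_zero_data_vanishes (u : fld R) : smoothR u ->
  (forall t x y, 0 <= t -> boxR u t x y = 0) -> (forall x y, u 0 x y = 0) ->
  (forall x y, pdR Dt u 0 x y = 0) -> forall t x y, 0 <= t -> u t x y = 0.
Proof.
  intros Hu Hbox Hu0 Hut0 T a b [HT | <-]; [| apply Hu0].
  rewrite <- (Hu0 a b). symmetry.
  apply (eq_is_derive (fun s => u s a b) 0 T); auto.
  intros s Hs. change (@zero R_NormedModule) with 0.
  rewrite <- (pdR_t_center_vanishes u (T + 1) a b Hu ltac:(lra) Hbox Hu0 Hut0 s)
    by lra.
  apply (is_derive_pdR Dt u s a b Hu).
Qed.

(** * Spinor fields in real components *)

Inductive comp := Re1 | Im1 | Re2 | Im2.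

Definition cmp (i : comp) (F : fld spinor) : fld R :=
  fun t x y =>
    match i with
    | Re1 => fst (fst (F t x y))
    | Im1 => snd (fst (F t x y))
    | Re2 => fst (snd (F t x y))
    | Im2 => snd (snd (F t x y))
    end.

Definition re_fld (G : fld C) : fld R := fun t x y => fst (G t x y).
Definition im_fld (G : fld C) : fld R := fun t x y => snd (G t x y).

Lemma spinor_eq (u w : spinor) :
  fst (fst u) = fst (fst w) -> snd (fst u) = snd (fst w) ->
  fst (snd u) = fst (snd w) -> snd (snd u) = snd (snd w) -> u = w.
Proof. destruct u as [[] []], w as [[] []]; simpl; intros; now subst. Qed.

Lemma C_eq (u w : C) : fst u = fst w -> snd u = snd w -> u = w.
Proof. destruct u, w; simpl; intros; now subst. Qed.

Ltac spinor_simpl := cbn [sadd sscal ssub sopp mv mm madd mscal szero hdot fst snd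
  Cplus Cmult Copp Cminus RtoC Ci Cconj gamma0 gamma1 gamma2 gam I2 m11 m12 m21 m22
  half omgg minus_part eta] in *; unfold Re, Im in *.

Ltac fold_cmp := repeat match goal with
  | |- context [fst (fst (?G ?a ?b ?c))] => change (fst (fst (G a b c))) with (cmp Re1 G a b c)
  | |- context [snd (fst (?G ?a ?b ?c))] => change (snd (fst (G a b c))) with (cmp Im1 G a b c)
  | |- context [fst (snd (?G ?a ?b ?c))] => change (fst (snd (G a b c))) with (cmp Re2 G a b c)
  | |- context [snd (snd (?G ?a ?b ?c))] => change (snd (snd (G a b c))) with (cmp Im2 G a b c)
  end.

Ltac fold_re_im := repeat match goal with
  | |- context [fst (?G ?a ?b ?c)] => change (fst (G a b c)) with (re_fld G a b c)
  | |- context [snd (?G ?a ?b ?c)] => change (snd (G a b c)) with (im_fld G a b c)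
  end.

Ltac real_eq := match goal with |- ?a = ?b => change (a = b :> R) end; first [ring | lra].

Lemma cmp_pdS i d F : cmp i (pdS d F) = pdR d (cmp i F).
Proof. now destruct i. Qed.

Lemma cmp_sadd i F G :
  cmp i (fun t x y => sadd (F t x y) (G t x y)) = fun t x y => cmp i F t x y + cmp i G t x y.
Proof. now destruct i. Qed.

Lemma cmp_ssub i F G :
  cmp i (fun t x y => ssub (F t x y) (G t x y)) = fun t x y => cmp i F t x y - cmp i G t x y.
Proof. now destruct i. Qed.

Lemma cmp_sopp i F : cmp i (fun t x y => sopp (F t x y)) = fun t x y => - cmp i F t x y.
Proof. now destruct i. Qed.

Lemma cmp_rmulS i v F : cmp i (rmulS v F) = fun t x y => v t x y * cmp i F t x y.
Proof. fld_ext. destruct i; unfold cmp, rmulS; spinor_simpl; real_eq. Qed.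

Lemma cmp_boxS i F : cmp i (boxS F) = fun t x y =>
  - pdR Dt (pdR Dt (cmp i F)) t x y + pdR D1 (pdR D1 (cmp i F)) t x y
  + pdR D2 (pdR D2 (cmp i F)) t x y.
Proof.
  fld_ext. destruct i; unfold cmp at 1, boxS, sumS; spinor_simpl; fold_cmp;
    rewrite ?cmp_pdS; real_eq.
Qed.

Lemma boxR_cmp i F t x y : boxR (cmp i F) t x y = cmp i (boxS F) t x y.
Proof. rewrite cmp_boxS. unfold boxR, sumR. cbn [eta]. real_eq. Qed.

Section ComponentFormulas.

Variable F : fld spinor.
Variable c : C.

Ltac component := fld_ext; lazymatch goal with |- cmp ?i _ _ _ _ = _ => unfold cmp at 1 end;
  unfold dirac, Omega_hat, L1_hat, L2_hat, sumS; spinor_simpl; fold_cmp;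
  rewrite ?cmp_pdS; real_eq.

Lemma cmp_sscal_Re1 : cmp Re1 (fun t x y => sscal c (F t x y))
  = fun t x y => fst c * cmp Re1 F t x y - snd c * cmp Im1 F t x y.
Proof. reflexivity. Qed.
Lemma cmp_sscal_Im1 : cmp Im1 (fun t x y => sscal c (F t x y))
  = fun t x y => fst c * cmp Im1 F t x y + snd c * cmp Re1 F t x y.
Proof. reflexivity. Qed.
Lemma cmp_sscal_Re2 : cmp Re2 (fun t x y => sscal c (F t x y))
  = fun t x y => fst c * cmp Re2 F t x y - snd c * cmp Im2 F t x y.
Proof. reflexivity. Qed.
Lemma cmp_sscal_Im2 : cmp Im2 (fun t x y => sscal c (F t x y))
  = fun t x y => fst c * cmp Im2 F t x y + snd c * cmp Re2 F t x y.
Proof. reflexivity. Qed.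

Lemma cmp_gamma0_Re1 : cmp Re1 (fun t x y => mv gamma0 (F t x y)) = cmp Re1 F.
Proof. component. Qed.
Lemma cmp_gamma0_Im1 : cmp Im1 (fun t x y => mv gamma0 (F t x y)) = cmp Im1 F.
Proof. component. Qed.
Lemma cmp_gamma0_Re2 : cmp Re2 (fun t x y => mv gamma0 (F t x y)) = fun t x y => - cmp Re2 F t x y.
Proof. component. Qed.
Lemma cmp_gamma0_Im2 : cmp Im2 (fun t x y => mv gamma0 (F t x y)) = fun t x y => - cmp Im2 F t x y.
Proof. component. Qed.

Lemma cmp_dirac_Re1 : cmp Re1 (dirac F) = fun t x y =>
  pdR Dt (cmp Re1 F) t x y + pdR D1 (cmp Re2 F) t x y + pdR D2 (cmp Im2 F) t x y.
Proof. component. Qed.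
Lemma cmp_dirac_Im1 : cmp Im1 (dirac F) = fun t x y =>
  pdR Dt (cmp Im1 F) t x y + pdR D1 (cmp Im2 F) t x y - pdR D2 (cmp Re2 F) t x y.
Proof. component. Qed.
Lemma cmp_dirac_Re2 : cmp Re2 (dirac F) = fun t x y =>
  - pdR Dt (cmp Re2 F) t x y - pdR D1 (cmp Re1 F) t x y + pdR D2 (cmp Im1 F) t x y.
Proof. component. Qed.
Lemma cmp_dirac_Im2 : cmp Im2 (dirac F) = fun t x y =>
  - pdR Dt (cmp Im2 F) t x y - pdR D1 (cmp Im1 F) t x y - pdR D2 (cmp Re1 F) t x y.
Proof. component. Qed.

Lemma cmp_Omega_Re1 : cmp Re1 (Omega_hat F) = fun t x y =>
  x * pdR D2 (cmp Re1 F) t x y - y * pdR D1 (cmp Re1 F) t x y - 1/2 * cmp Im1 F t x y.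
Proof. component. Qed.
Lemma cmp_Omega_Im1 : cmp Im1 (Omega_hat F) = fun t x y =>
  x * pdR D2 (cmp Im1 F) t x y - y * pdR D1 (cmp Im1 F) t x y + 1/2 * cmp Re1 F t x y.
Proof. component. Qed.
Lemma cmp_Omega_Re2 : cmp Re2 (Omega_hat F) = fun t x y =>
  x * pdR D2 (cmp Re2 F) t x y - y * pdR D1 (cmp Re2 F) t x y + 1/2 * cmp Im2 F t x y.
Proof. component. Qed.
Lemma cmp_Omega_Im2 : cmp Im2 (Omega_hat F) = fun t x y =>
  x * pdR D2 (cmp Im2 F) t x y - y * pdR D1 (cmp Im2 F) t x y - 1/2 * cmp Re2 F t x y.
Proof. component. Qed.

Lemma cmp_L1_Re1 : cmp Re1 (L1_hat F) = fun t x y =>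
  t * pdR D1 (cmp Re1 F) t x y + x * pdR Dt (cmp Re1 F) t x y - 1/2 * cmp Re2 F t x y.
Proof. component. Qed.
Lemma cmp_L1_Im1 : cmp Im1 (L1_hat F) = fun t x y =>
  t * pdR D1 (cmp Im1 F) t x y + x * pdR Dt (cmp Im1 F) t x y - 1/2 * cmp Im2 F t x y.
Proof. component. Qed.
Lemma cmp_L1_Re2 : cmp Re2 (L1_hat F) = fun t x y =>
  t * pdR D1 (cmp Re2 F) t x y + x * pdR Dt (cmp Re2 F) t x y - 1/2 * cmp Re1 F t x y.
Proof. component. Qed.
Lemma cmp_L1_Im2 : cmp Im2 (L1_hat F) = fun t x y =>
  t * pdR D1 (cmp Im2 F) t x y + x * pdR Dt (cmp Im2 F) t x y - 1/2 * cmp Im1 F t x y.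
Proof. component. Qed.

Lemma cmp_L2_Re1 : cmp Re1 (L2_hat F) = fun t x y =>
  t * pdR D2 (cmp Re1 F) t x y + y * pdR Dt (cmp Re1 F) t x y - 1/2 * cmp Im2 F t x y.
Proof. component. Qed.
Lemma cmp_L2_Im1 : cmp Im1 (L2_hat F) = fun t x y =>
  t * pdR D2 (cmp Im1 F) t x y + y * pdR Dt (cmp Im1 F) t x y + 1/2 * cmp Re2 F t x y.
Proof. component. Qed.
Lemma cmp_L2_Re2 : cmp Re2 (L2_hat F) = fun t x y =>
  t * pdR D2 (cmp Re2 F) t x y + y * pdR Dt (cmp Re2 F) t x y + 1/2 * cmp Im1 F t x y.
Proof. component. Qed.
Lemma cmp_L2_Im2 : cmp Im2 (L2_hat F) = fun t x y =>
  t * pdR D2 (cmp Im2 F) t x y + y * pdR Dt (cmp Im2 F) t x y - 1/2 * cmp Re1 F t x y.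
Proof. component. Qed.

End ComponentFormulas.

Ltac cmp_expand := repeat progress rewrite
  ?cmp_dirac_Re1, ?cmp_dirac_Im1, ?cmp_dirac_Re2, ?cmp_dirac_Im2,
  ?cmp_Omega_Re1, ?cmp_Omega_Im1, ?cmp_Omega_Re2, ?cmp_Omega_Im2,
  ?cmp_L1_Re1, ?cmp_L1_Im1, ?cmp_L1_Re2, ?cmp_L1_Im2,
  ?cmp_L2_Re1, ?cmp_L2_Im1, ?cmp_L2_Re2, ?cmp_L2_Im2,
  ?cmp_boxS, ?cmp_rmulS, ?cmp_pdS,
  ?cmp_gamma0_Re1, ?cmp_gamma0_Im1, ?cmp_gamma0_Re2, ?cmp_gamma0_Im2,
  ?cmp_sscal_Re1, ?cmp_sscal_Im1, ?cmp_sscal_Re2, ?cmp_sscal_Im2,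
  ?cmp_sadd, ?cmp_ssub, ?cmp_sopp.

Ltac smooth := repeat (cbv beta; match goal with
  | |- smoothR (fun t x y => @?f t x y + @?g t x y) => apply (smoothR_plus f g)
  | |- smoothR (fun t x y => @?f t x y - @?g t x y) => apply (smoothR_minus f g)
  | |- smoothR (fun t x y => @?f t x y * @?g t x y) => apply (smoothR_mult f g)
  | |- smoothR (fun t x y => - @?f t x y) => apply (smoothR_opp f)
  | |- smoothR (fun t x y => pdR ?d ?f t x y) => apply (smoothR_pdR d f)
  | |- smoothR (pdR ?d ?f) => apply (smoothR_pdR d f)
  | |- smoothR (fun _ _ _ => ?c) => apply (smoothR_const c)
  | |- smoothR (fun t _ _ => t) => apply smoothR_t
  | |- smoothR (fun _ x _ => x) => apply smoothR_x
  | |- smoothR (fun _ _ y => y) => apply smoothR_y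
  | |- smoothR _ => assumption
  end).

Ltac push_pdR := repeat (cbv beta; match goal with
  | |- context [pdR ?d (fun t x y => @?f t x y + @?g t x y)] =>
      rewrite (pdR_plus d f g) by (apply smoothR_partially_differentiable; smooth)
  | |- context [pdR ?d (fun t x y => @?f t x y - @?g t x y)] =>
      rewrite (pdR_minus d f g) by (apply smoothR_partially_differentiable; smooth)
  | |- context [pdR ?d (fun t x y => @?f t x y * @?g t x y)] =>
      rewrite (pdR_mult d f g) by (apply smoothR_partially_differentiable; smooth)
  | |- context [pdR ?d (fun t x y => - @?f t x y)] => rewrite (pdR_opp d f)
  | |- context [pdR ?d (fun _ _ _ => ?c)] => rewrite (pdR_const d c)
  | |- context [pdR ?d (fun t _ _ => t)] => rewrite (pdR_t d)
  | |- context [pdR ?d (fun _ x _ => x)] => rewrite (pdR_x d)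
  | |- context [pdR ?d (fun _ _ y => y)] => rewrite (pdR_y d)
  end).

Ltac eta_fld := repeat match goal with |- context [fun t x y => ?g t x y] =>
  change (fun t x y => g t x y) with g end.

Ltac commute_pdR := eta_fld; repeat first
  [ rewrite (pdR_comm _ D1 Dt) by smooth
  | rewrite (pdR_comm _ D2 Dt) by smooth
  | rewrite (pdR_comm _ D2 D1) by smooth ].

Definition smooth_cmps (F : fld spinor) : Prop := forall i, smoothR (cmp i F).

Lemma smoothS_cmps F : smoothS F -> smooth_cmps F.
Proof. intros [[H1 H2] [H3 H4]] i; now destruct i. Qed.

Ltac split_smooth := repeat match goal with
  | H : smooth_cmps ?F |- _ =>
      pose proof (H Re1); pose proof (H Im1); pose proof (H Re2); pose proof (H Im2); clear H
  end.

(* Reduce an identity between spinor fields to four real identities between partial derivatives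
   of the components, commuting mixed derivatives into a normal order. *)
Ltac spinor_calc := split_smooth; apply spinor_eq; spinor_simpl; fold_cmp; cmp_expand;
  cbv beta; cbn [fst snd Ci RtoC] in *; push_pdR; cbn [kronecker]; commute_pdR; real_eq.

Ltac smooth_cmps_closure := intros; split_smooth;
  intros []; cmp_expand; cbv beta; cbn [fst snd Ci RtoC]; smooth.

Lemma smooth_cmps_pdS F d : smooth_cmps F -> smooth_cmps (pdS d F).
Proof. smooth_cmps_closure. Qed.
Lemma smooth_cmps_dirac F : smooth_cmps F -> smooth_cmps (dirac F).
Proof. smooth_cmps_closure. Qed.
Lemma smooth_cmps_boxS F : smooth_cmps F -> smooth_cmps (boxS F).
Proof. smooth_cmps_closure. Qed.
Lemma smooth_cmps_Omega_hat F : smooth_cmps F -> smooth_cmps (Omega_hat F).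
Proof. smooth_cmps_closure. Qed.
Lemma smooth_cmps_L1_hat F : smooth_cmps F -> smooth_cmps (L1_hat F).
Proof. smooth_cmps_closure. Qed.
Lemma smooth_cmps_L2_hat F : smooth_cmps F -> smooth_cmps (L2_hat F).
Proof. smooth_cmps_closure. Qed.
Lemma smooth_cmps_rmulS v F : smoothR v -> smooth_cmps F -> smooth_cmps (rmulS v F).
Proof. smooth_cmps_closure. Qed.
Lemma smooth_cmps_sscal c F : smooth_cmps F -> smooth_cmps (fun t x y => sscal c (F t x y)).
Proof. smooth_cmps_closure. Qed.
Lemma smooth_cmps_ssub F G : smooth_cmps F -> smooth_cmps G ->
  smooth_cmps (fun t x y => ssub (F t x y) (G t x y)).
Proof. smooth_cmps_closure. Qed.
Lemma smooth_cmps_sopp F : smooth_cmps F -> smooth_cmps (fun t x y => sopp (F t x y)).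
Proof. smooth_cmps_closure. Qed.

Lemma dirac_dirac F t x y : smooth_cmps F ->
  dirac (dirac F) t x y = sopp (boxS F t x y).
Proof. intros; spinor_calc. Qed.

Lemma boxS_rmulS F v t x y : smooth_cmps F -> smoothR v ->
  boxS (rmulS v F) t x y =
  sadd (sscal (RtoC (boxR v t x y)) (F t x y))
       (sadd (sscal (RtoC (v t x y)) (boxS F t x y)) (sscal (RtoC (-2)) (Q0 F v t x y))).
Proof. intros; unfold boxR, sumR, Q0, sumS. spinor_calc. Qed.

Lemma boxS_dirac F t x y : smooth_cmps F ->
  boxS (dirac F) t x y = dirac (boxS F) t x y.
Proof. intros; spinor_calc. Qed.

Lemma dirac_pdS F d t x y : smooth_cmps F ->
  dirac (pdS d F) t x y = pdS d (dirac F) t x y.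
Proof. intros; destruct d; spinor_calc. Qed.

Lemma dirac_Omega_hat F t x y : smooth_cmps F ->
  dirac (Omega_hat F) t x y = Omega_hat (dirac F) t x y.
Proof. intros; spinor_calc. Qed.

Lemma dirac_L1_hat F t x y : smooth_cmps F ->
  dirac (L1_hat F) t x y = L1_hat (dirac F) t x y.
Proof. intros; spinor_calc. Qed.

Lemma dirac_L2_hat F t x y : smooth_cmps F ->
  dirac (L2_hat F) t x y = L2_hat (dirac F) t x y.
Proof. intros; spinor_calc. Qed.

Lemma dirac_sadd F G t x y : smooth_cmps F -> smooth_cmps G ->
  dirac (fun t x y => sadd (F t x y) (G t x y)) t x y = sadd (dirac F t x y) (dirac G t x y).
Proof. intros; spinor_calc. Qed.

Lemma dirac_sscal F c t x y : smooth_cmps F ->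
  dirac (fun t x y => sscal c (F t x y)) t x y = sscal c (dirac F t x y).
Proof. intros; spinor_calc. Qed.

Lemma dirac_sopp F t x y : smooth_cmps F ->
  dirac (fun t x y => sopp (F t x y)) t x y = sopp (dirac F t x y).
Proof. intros; spinor_calc. Qed.

Lemma boxS_ssub F G t x y : smooth_cmps F -> smooth_cmps G ->
  boxS (fun t x y => ssub (F t x y) (G t x y)) t x y = ssub (boxS F t x y) (boxS G t x y).
Proof. intros; spinor_calc. Qed.

Lemma boxS_sscal F c t x y : smooth_cmps F ->
  boxS (fun t x y => sscal c (F t x y)) t x y = sscal c (boxS F t x y).
Proof. intros; spinor_calc. Qed.

Lemma pdS_ssub F G d t x y : smooth_cmps F -> smooth_cmps G ->
  pdS d (fun t x y => ssub (F t x y) (G t x y)) t x y = ssub (pdS d F t x y) (pdS d G t x y).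
Proof. intros; destruct d; spinor_calc. Qed.

Lemma pdS_sscal F c d t x y : smooth_cmps F ->
  pdS d (fun t x y => sscal c (F t x y)) t x y = sscal c (pdS d F t x y).
Proof. intros; destruct d; spinor_calc. Qed.

Lemma Omega_hat_sscal F c t x y : smooth_cmps F ->
  Omega_hat (fun t x y => sscal c (F t x y)) t x y = sscal c (Omega_hat F t x y).
Proof. intros; spinor_calc. Qed.

Lemma L1_hat_sscal F c t x y : smooth_cmps F ->
  L1_hat (fun t x y => sscal c (F t x y)) t x y = sscal c (L1_hat F t x y).
Proof. intros; spinor_calc. Qed.

Lemma L2_hat_sscal F c t x y : smooth_cmps F ->
  L2_hat (fun t x y => sscal c (F t x y)) t x y = sscal c (L2_hat F t x y).
Proof. intros; spinor_calc. Qed.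


Lemma re_fld_pdC d G : re_fld (pdC d G) = pdR d (re_fld G).
Proof. reflexivity. Qed.
Lemma im_fld_pdC d G : im_fld (pdC d G) = pdR d (im_fld G).
Proof. reflexivity. Qed.

Lemma re_fld_boxC G : re_fld (boxC G) = fun t x y =>
  - pdR Dt (pdR Dt (re_fld G)) t x y + pdR D1 (pdR D1 (re_fld G)) t x y
  + pdR D2 (pdR D2 (re_fld G)) t x y.
Proof.
  fld_ext. unfold re_fld at 1. unfold boxC, sumC. spinor_simpl. fold_re_im.
  rewrite ?re_fld_pdC, ?im_fld_pdC. real_eq.
Qed.
Lemma im_fld_boxC G : im_fld (boxC G) = fun t x y =>
  - pdR Dt (pdR Dt (im_fld G)) t x y + pdR D1 (pdR D1 (im_fld G)) t x y
  + pdR D2 (pdR D2 (im_fld G)) t x y.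
Proof.
  fld_ext. unfold im_fld at 1. unfold boxC, sumC. spinor_simpl. fold_re_im.
  rewrite ?re_fld_pdC, ?im_fld_pdC. real_eq.
Qed.

Lemma re_fld_Csub (A B : fld C) :
  re_fld (fun t x y => (A t x y - B t x y)%C) = fun t x y => re_fld A t x y - re_fld B t x y.
Proof. reflexivity. Qed.
Lemma im_fld_Csub (A B : fld C) :
  im_fld (fun t x y => (A t x y - B t x y)%C) = fun t x y => im_fld A t x y - im_fld B t x y.
Proof. reflexivity. Qed.

Lemma re_fld_RtoC (v : fld R) : re_fld (fun t x y => RtoC (v t x y)) = v.
Proof. reflexivity. Qed.
Lemma im_fld_RtoC (v : fld R) : im_fld (fun t x y => RtoC (v t x y)) = fun _ _ _ => 0.
Proof. reflexivity. Qed.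

Lemma re_fld_hdot_gamma0 F : re_fld (fun t x y => hdot (F t x y) (mv gamma0 (F t x y))) =
  fun t x y => cmp Re1 F t x y * cmp Re1 F t x y + cmp Im1 F t x y * cmp Im1 F t x y
             - cmp Re2 F t x y * cmp Re2 F t x y - cmp Im2 F t x y * cmp Im2 F t x y.
Proof. fld_ext. unfold re_fld. spinor_simpl. fold_cmp. real_eq. Qed.
Lemma im_fld_hdot_gamma0 F :
  im_fld (fun t x y => hdot (F t x y) (mv gamma0 (F t x y))) = fun _ _ _ => 0.
Proof. fld_ext. unfold im_fld. spinor_simpl. fold_cmp. real_eq. Qed.

Lemma boxC_wave_minus_density F v : smooth_cmps F -> smoothR v -> forall t x y,
  boxC (fun t x y => (RtoC (v t x y) - hdot (F t x y) (mv gamma0 (F t x y)))%C) t x y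
  = (RtoC (boxR v t x y) - (hdot (boxS F t x y) (mv gamma0 (F t x y))
       + hdot (F t x y) (mv gamma0 (boxS F t x y)) + N4 F t x y))%C.
Proof.
  intros HF Hv t x y. split_smooth. unfold boxR, sumR, N4, sumC.
  apply C_eq; spinor_simpl; fold_cmp; fold_re_im;
    repeat progress rewrite ?re_fld_boxC, ?im_fld_boxC, ?re_fld_Csub, ?im_fld_Csub,
      ?re_fld_RtoC, ?im_fld_RtoC, ?re_fld_hdot_gamma0, ?im_fld_hdot_gamma0,
      ?re_fld_pdC, ?im_fld_pdC;
    cmp_expand; cbv beta; push_pdR; commute_pdR; real_eq.
Qed.

(** * Operators compatible with the Dirac operator *)

Definition future_eq (F G : fld spinor) : Prop := forall t x y, 0 <= t -> F t x y = G t x y.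

Lemma spinor_eq_cmp (F G : fld spinor) t x y :
  (forall i, cmp i F t x y = cmp i G t x y) -> F t x y = G t x y.
Proof.
  intros H. apply spinor_eq; [apply (H Re1) | apply (H Im1) | apply (H Re2) | apply (H Im2)].
Qed.

Lemma pdR_future_eq (f g : fld R) d t x y : smoothR f -> smoothR g ->
  (forall t x y, 0 <= t -> f t x y = g t x y) -> 0 <= t -> pdR d f t x y = pdR d g t x y.
Proof.
  intros Hf Hg H Ht. destruct d; simpl.
  - apply Derive_ext_right; [intros; apply H; lra | ..];
      [apply (smoothR_partially_differentiable f Hf Dt)
      | apply (smoothR_partially_differentiable g Hg Dt)].
  - apply Derive_ext. intros; now apply H.
  - apply Derive_ext. intros; now apply H.
Qed.

Lemma future_eq_pdS F G d : smooth_cmps F -> smooth_cmps G -> future_eq F G ->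
  future_eq (pdS d F) (pdS d G).
Proof.
  intros HF HG H t x y Ht. apply spinor_eq_cmp. intros i. rewrite !cmp_pdS.
  apply pdR_future_eq; auto. intros t' x' y' Ht'. unfold cmp. now rewrite H.
Qed.

Lemma future_eq_dirac F G : smooth_cmps F -> smooth_cmps G -> future_eq F G ->
  future_eq (dirac F) (dirac G).
Proof.
  intros HF HG H t x y Ht. unfold dirac, sumS.
  now rewrite !(future_eq_pdS F G _ HF HG H t x y Ht).
Qed.

Lemma future_eq_Omega_hat F G : smooth_cmps F -> smooth_cmps G -> future_eq F G ->
  future_eq (Omega_hat F) (Omega_hat G).
Proof.
  intros HF HG H t x y Ht. unfold Omega_hat.
  now rewrite !(future_eq_pdS F G _ HF HG H t x y Ht), (H t x y Ht).
Qed.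

Lemma future_eq_L1_hat F G : smooth_cmps F -> smooth_cmps G -> future_eq F G ->
  future_eq (L1_hat F) (L1_hat G).
Proof.
  intros HF HG H t x y Ht. unfold L1_hat.
  now rewrite !(future_eq_pdS F G _ HF HG H t x y Ht), (H t x y Ht).
Qed.

Lemma future_eq_L2_hat F G : smooth_cmps F -> smooth_cmps G -> future_eq F G ->
  future_eq (L2_hat F) (L2_hat G).
Proof.
  intros HF HG H t x y Ht. unfold L2_hat.
  now rewrite !(future_eq_pdS F G _ HF HG H t x y Ht), (H t x y Ht).
Qed.

Definition minus_i_dirac (F : fld spinor) : fld spinor :=
  fun t x y => sscal (- Ci)%C (dirac F t x y).

Lemma smooth_cmps_minus_i_dirac F : smooth_cmps F -> smooth_cmps (minus_i_dirac F).
Proof. intros. now apply smooth_cmps_sscal, smooth_cmps_dirac. Qed.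

Record dirac_compatible (op : fld spinor -> fld spinor) : Prop := {
  dirac_compatible_smooth : forall F, smooth_cmps F -> smooth_cmps (op F);
  dirac_compatible_comm : forall F, smooth_cmps F -> minus_i_dirac (op F) = op (minus_i_dirac F);
  dirac_compatible_future : forall F G, smooth_cmps F -> smooth_cmps G ->
    future_eq F G -> future_eq (op F) (op G)
}.

Lemma dirac_compatible_pdS d : dirac_compatible (pdS d).
Proof.
  split; auto using smooth_cmps_pdS, future_eq_pdS.
  intros F HF. fld_ext. unfold minus_i_dirac.
  rewrite dirac_pdS by assumption. symmetry. now apply pdS_sscal, smooth_cmps_dirac.
Qed.

Lemma dirac_compatible_Omega_hat : dirac_compatible Omega_hat.
Proof.
  split; auto using smooth_cmps_Omega_hat, future_eq_Omega_hat.
  intros F HF. fld_ext. unfold minus_i_dirac.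
  rewrite dirac_Omega_hat by assumption. symmetry. now apply Omega_hat_sscal, smooth_cmps_dirac.
Qed.

Lemma dirac_compatible_L1_hat : dirac_compatible L1_hat.
Proof.
  split; auto using smooth_cmps_L1_hat, future_eq_L1_hat.
  intros F HF. fld_ext. unfold minus_i_dirac.
  rewrite dirac_L1_hat by assumption. symmetry. now apply L1_hat_sscal, smooth_cmps_dirac.
Qed.

Lemma dirac_compatible_L2_hat : dirac_compatible L2_hat.
Proof.
  split; auto using smooth_cmps_L2_hat, future_eq_L2_hat.
  intros F HF. fld_ext. unfold minus_i_dirac.
  rewrite dirac_L2_hat by assumption. symmetry. now apply L2_hat_sscal, smooth_cmps_dirac.
Qed.

Lemma dirac_compatible_comp f g : dirac_compatible f -> dirac_compatible g ->
  dirac_compatible (fun F => f (g F)).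
Proof.
  intros [F1 F2 F3] [G1 G2 G3]. split; auto.
  intros F HF. now rewrite F2, G2 by auto.
Qed.

Lemma dirac_compatible_iter op n : dirac_compatible op -> dirac_compatible (Nat.iter n op).
Proof.
  intros Hop. induction n as [|n IH]; simpl.
  - now split.
  - exact (dirac_compatible_comp op (Nat.iter n op) Hop IH).
Qed.

Lemma dirac_compatible_GammaI I : dirac_compatible (GammaI I).
Proof.
  destruct I as [[[[[i1 i2] i3] i4] i5] i6].
  pose proof dirac_compatible_pdS.
  apply (dirac_compatible_comp (Nat.iter i1 (pdS Dt))); [now apply dirac_compatible_iter|].
  apply (dirac_compatible_comp (Nat.iter i2 (pdS D1))); [now apply dirac_compatible_iter|].
  apply (dirac_compatible_comp (Nat.iter i3 (pdS D2))); [now apply dirac_compatible_iter|].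
  apply (dirac_compatible_comp (Nat.iter i4 Omega_hat));
    [apply dirac_compatible_iter, dirac_compatible_Omega_hat|].
  apply (dirac_compatible_comp (Nat.iter i5 L1_hat));
    [apply dirac_compatible_iter, dirac_compatible_L1_hat|].
  apply dirac_compatible_iter, dirac_compatible_L2_hat.
Qed.

Lemma omega_unit x1 x2 : (x1, x2) <> (0, 0) -> om1 x1 x2 * om1 x1 x2 + om2 x1 x2 * om2 x1 x2 = 1.
Proof.
  intros Hne. unfold om1, om2, rad.
  assert (Hpos : 0 < x1 ^ 2 + x2 ^ 2).
  { destruct (Req_dec x1 0) as [-> | H1].
    - destruct (Req_dec x2 0) as [-> | H2]; [congruence|].
      pose proof (pow2_gt_0 x2 H2). lra.
    - pose proof (pow2_gt_0 x1 H1); pose proof (pow2_ge_0 x2). lra. }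
  pose proof (sqrt_lt_R0 _ Hpos) as Hr. pose proof (sqrt_sqrt (x1 ^ 2 + x2 ^ 2) ltac:(lra)) as Hrr.
  set (r := sqrt (x1 ^ 2 + x2 ^ 2)) in *.
  replace (x1 / r * (x1 / r) + x2 / r * (x2 / r)) with ((x1 ^ 2 + x2 ^ 2) / (r * r))
    by (field; lra).
  rewrite Hrr. field. lra.
Qed.

(* [(I - omega_a gamma^0 gamma^a) (gamma^0 - omega_b gamma^b) = (1 - |omega|^2) gamma^0]: for
   [|omega| = 1] the time derivative is absorbed into the good derivatives [G_b]. *)
Lemma minus_part_minus_i_dirac G t x1 x2 :
  minus_part x1 x2 (minus_i_dirac G t x1 x2)
  = sadd (sscal (- Ci)%C (mv (madd I2 (mscal (RtoC (-1)) (omgg x1 x2))) (gammaG G t x1 x2)))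
         (sscal (RtoC (1 - (om1 x1 x2 * om1 x1 x2 + om2 x1 x2 * om2 x1 x2)))
                (sscal (- Ci)%C (mv gamma0 (pdS Dt G t x1 x2)))).
Proof.
  unfold minus_i_dirac, dirac, sumS, gammaG.
  apply spinor_eq; spinor_simpl; fold_cmp; real_eq.
Qed.

Lemma pdS_at_0 (F G : fld spinor) d x y : d <> Dt ->
  (forall x' y', F 0 x' y' = G 0 x' y') -> pdS d F 0 x y = pdS d G 0 x y.
Proof.
  intros Hd H. apply spinor_eq_cmp. intros i. rewrite !cmp_pdS.
  destruct d; [congruence | ..]; apply Derive_ext; intros; unfold cmp; now rewrite H.
Qed.

Lemma pdS_const d u t x y : pdS d (fun _ _ _ => u) t x y = szero.
Proof. destruct d; unfold pdS, pdC, pdR; simpl; now rewrite !Derive_const. Qed.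

(** * The Dirac--Klein--Gordon system *)

Section DiracKleinGordon.

Variables psi Psi : fld spinor.
Variable v : fld R.
Hypothesis Hpsi : smooth_cmps psi.
Hypothesis HPsi : smooth_cmps Psi.
Hypothesis Hv : smoothR v.
Hypothesis Hdirac : forall t x y, 0 <= t ->
  sscal (- Ci)%C (dirac psi t x y) = sscal (RtoC (v t x y)) (psi t x y).
Hypothesis Hkg : forall t x y, 0 <= t ->
  RtoC (- boxR v t x y + v t x y) = hdot (psi t x y) (mv gamma0 (psi t x y)).

Lemma dirac_psi : future_eq (dirac psi) (fun t x y => sscal Ci (rmulS v psi t x y)).
Proof.
  intros t x y Ht. unfold rmulS. rewrite <- Hdirac by assumption.
  apply spinor_eq; spinor_simpl; real_eq.
Qed.

Lemma boxS_psi t x y : 0 <= t -> boxS psi t x y = sopp (sscal Ci (dirac (rmulS v psi) t x y)).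
Proof.
  intros Ht.
  assert (HvPsi : smooth_cmps (rmulS v psi)) by now apply smooth_cmps_rmulS.
  assert (E : dirac (dirac psi) t x y = sscal Ci (dirac (rmulS v psi) t x y)).
  { rewrite (future_eq_dirac _ _ (smooth_cmps_dirac _ Hpsi) (smooth_cmps_sscal Ci _ HvPsi)
               dirac_psi t x y Ht).
    now apply dirac_sscal. }
  rewrite dirac_dirac in E by assumption. rewrite <- E.
  apply spinor_eq; spinor_simpl; real_eq.
Qed.

Lemma boxR_v t x y : 0 <= t ->
  boxR v t x y = v t x y - fst (hdot (psi t x y) (mv gamma0 (psi t x y))).
Proof. intros Ht. rewrite <- (Hkg t x y Ht). simpl. ring. Qed.

Lemma dirac_psi_tilde t x y : 0 <= t ->
  let psit := fun t x y => sadd (psi t x y) (sscal Ci (dirac (rmulS v psi) t x y)) in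
  sscal (- Ci)%C (dirac psit t x y)
  = sadd (N1 psi v t x y) (sadd (N2 psi t x y) (sscal (RtoC 2) (Q0 psi v t x y))).
Proof.
  intros Ht psit. unfold psit.
  assert (HvPsi : smooth_cmps (rmulS v psi)) by now apply smooth_cmps_rmulS.
  rewrite dirac_sadd, dirac_sscal, dirac_dirac, boxS_rmulS, boxS_psi, boxR_v, dirac_psi
    by auto using smooth_cmps_sscal, smooth_cmps_dirac.
  unfold N1, N2, rmulS. apply spinor_eq; spinor_simpl; fold_cmp; real_eq.
Qed.

Lemma kg_v_tilde t x y : 0 <= t ->
  let vt := fun t x y => (RtoC (v t x y) - hdot (psi t x y) (mv gamma0 (psi t x y)))%C in
  (- boxC vt t x y + vt t x y)%C = (N3 psi v t x y + N4 psi t x y)%C.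
Proof.
  intros Ht vt. unfold vt.
  rewrite boxC_wave_minus_density, boxS_psi, boxR_v by assumption.
  unfold N3, sumC, dirac, sumS. apply C_eq; spinor_simpl; fold_cmp; real_eq.
Qed.

Hypothesis HboxPsi : forall t x y, 0 <= t -> sopp (boxS Psi t x y) = sscal Ci (dirac psi t x y).
Hypothesis Hinit : forall x y, Psi 0 x y = szero /\
  pdS Dt Psi 0 x y = sscal Ci (mv gamma0 (psi 0 x y)).

Lemma wave_Psi_tilde t x y : 0 <= t ->
  let Psit := fun t x y => ssub (Psi t x y) (rmulS v psi t x y) in
  sopp (boxS Psit t x y)
  = sopp (sadd (N1 psi v t x y) (sadd (N2 psi t x y) (sscal (RtoC 2) (Q0 psi v t x y)))).
Proof.
  intros Ht Psit. unfold Psit.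
  assert (HboxPsi' : boxS Psi t x y = sopp (sscal Ci (dirac psi t x y))).
  { rewrite <- HboxPsi by assumption. apply spinor_eq; spinor_simpl; real_eq. }
  rewrite boxS_ssub, HboxPsi', boxS_rmulS, boxS_psi, boxR_v, dirac_psi
    by auto using smooth_cmps_rmulS.
  unfold N1, N2, rmulS. apply spinor_eq; spinor_simpl; fold_cmp; real_eq.
Qed.

Lemma pdS_space_Psi_0 d x y : d <> Dt -> pdS d Psi 0 x y = szero.
Proof.
  intros Hd. rewrite (pdS_at_0 Psi (fun _ _ _ => szero)) by (auto; intros; apply Hinit).
  apply pdS_const.
Qed.

Lemma pdS_space2_Psi_0 d x y : d <> Dt -> pdS d (pdS d Psi) 0 x y = szero.
Proof.
  intros Hd. rewrite (pdS_at_0 (pdS d Psi) (fun _ _ _ => szero))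
    by (auto; intros; now apply pdS_space_Psi_0).
  apply pdS_const.
Qed.

Lemma pdS_tt_Psi_0 x y : pdS Dt (pdS Dt Psi) 0 x y = sscal Ci (dirac psi 0 x y).
Proof.
  rewrite <- (HboxPsi 0 x y (Rle_refl 0)). unfold boxS, sumS.
  rewrite (pdS_space2_Psi_0 D1), (pdS_space2_Psi_0 D2) by discriminate.
  apply spinor_eq; spinor_simpl; real_eq.
Qed.

Lemma pdS_space_t_Psi_0 d x y : d <> Dt ->
  pdS d (pdS Dt Psi) 0 x y = sscal Ci (mv gamma0 (pdS d psi 0 x y)).
Proof.
  intros Hd.
  rewrite (pdS_at_0 (pdS Dt Psi) (fun t x y => sscal Ci (mv gamma0 (psi t x y))))
    by (auto; intros; apply Hinit).
  destruct d; spinor_calc.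
Qed.

Definition dirac_defect : fld spinor := fun t x y => ssub (minus_i_dirac Psi t x y) (psi t x y).

Lemma smooth_cmps_dirac_defect : smooth_cmps dirac_defect.
Proof. apply smooth_cmps_ssub; auto using smooth_cmps_minus_i_dirac. Qed.

Lemma boxS_dirac_defect t x y : 0 <= t -> boxS dirac_defect t x y = szero.
Proof.
  intros Ht.
  assert (HboxPsi' : future_eq (boxS Psi) (fun t x y => sopp (sscal Ci (dirac psi t x y)))).
  { intros t' x' y' Ht'. rewrite <- HboxPsi by assumption. apply spinor_eq; spinor_simpl; real_eq. }
  assert (Hdpsi : smooth_cmps (dirac psi)) by now apply smooth_cmps_dirac.
  unfold dirac_defect, minus_i_dirac.
  rewrite boxS_ssub, boxS_sscal, boxS_dirac by auto using smooth_cmps_sscal, smooth_cmps_dirac.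
  rewrite (future_eq_dirac _ _ (smooth_cmps_boxS _ HPsi)
             (smooth_cmps_sopp _ (smooth_cmps_sscal Ci _ Hdpsi)) HboxPsi' t x y Ht).
  rewrite dirac_sopp, dirac_sscal, dirac_dirac by auto using smooth_cmps_sscal.
  apply spinor_eq; spinor_simpl; real_eq.
Qed.

Lemma dirac_defect_0 x y : dirac_defect 0 x y = szero.
Proof.
  unfold dirac_defect, minus_i_dirac, dirac, sumS.
  rewrite (proj2 (Hinit x y)), (pdS_space_Psi_0 D1), (pdS_space_Psi_0 D2) by discriminate.
  apply spinor_eq; spinor_simpl; real_eq.
Qed.

Lemma pdS_t_dirac_defect_0 x y : pdS Dt dirac_defect 0 x y = szero.
Proof.
  unfold dirac_defect, minus_i_dirac.
  rewrite pdS_ssub, pdS_sscal, <- dirac_pdS by auto using smooth_cmps_sscal, smooth_cmps_dirac.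
  unfold dirac, sumS.
  rewrite pdS_tt_Psi_0, (pdS_space_t_Psi_0 D1), (pdS_space_t_Psi_0 D2) by discriminate.
  unfold dirac, sumS. apply spinor_eq; spinor_simpl; real_eq.
Qed.

Lemma minus_i_dirac_Psi : future_eq (minus_i_dirac Psi) psi.
Proof.
  intros t x y Ht.
  assert (Hzero : forall i, cmp i dirac_defect t x y = 0).
  { intros i. apply wave_zero_data_vanishes; auto.
    - apply smooth_cmps_dirac_defect.
    - intros t' x' y' Ht'. rewrite boxR_cmp. unfold cmp.
      rewrite boxS_dirac_defect by assumption. now destruct i.
    - intros x' y'. unfold cmp. rewrite dirac_defect_0. now destruct i.
    - intros x' y'. rewrite <- cmp_pdS. unfold cmp. rewrite pdS_t_dirac_defect_0. now destruct i. }
  apply spinor_eq_cmp. intros i. specialize (Hzero i).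
  destruct i; unfold dirac_defect, cmp in *; spinor_simpl; lra.
Qed.

Lemma good_derivatives_GammaI I t x1 x2 : 0 <= t -> (x1, x2) <> (0, 0) ->
  minus_part x1 x2 (GammaI I psi t x1 x2)
  = sscal (- Ci)%C (mv (madd I2 (mscal (RtoC (-1)) (omgg x1 x2))) (gammaG (GammaI I Psi) t x1 x2)).
Proof.
  intros Ht Hne. destruct (dirac_compatible_GammaI I) as [_ Hcomm Hfuture].
  rewrite <- (Hfuture _ _ (smooth_cmps_minus_i_dirac _ HPsi) Hpsi minus_i_dirac_Psi t x1 x2 Ht).
  rewrite <- Hcomm, minus_part_minus_i_dirac, omega_unit by assumption.
  apply spinor_eq; spinor_simpl; real_eq.
Qed.

End DiracKleinGordon.

Theorem lemma2p14 (psi Psi : fld spinor) (v : fld R) :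
  smoothS psi -> smoothS Psi -> smoothR v ->
  (* -i gamma^mu d_mu psi = v psi  on [0,oo) x R^2 *)
  (forall t x1 x2, 0 <= t ->
     sscal (- Ci)%C (dirac psi t x1 x2) = sscal (RtoC (v t x1 x2)) (psi t x1 x2)) ->
  (* -Box v + v = psi^* gamma^0 psi *)
  (forall t x1 x2, 0 <= t ->
     RtoC (- boxR v t x1 x2 + v t x1 x2) = hdot (psi t x1 x2) (mv gamma0 (psi t x1 x2))) ->
  (* -Box Psi = i gamma^mu d_mu psi *)
  (forall t x1 x2, 0 <= t ->
     sopp (boxS Psi t x1 x2) = sscal Ci (dirac psi t x1 x2)) ->
  (* (Psi, d_t Psi)|_{t=0} = (0, i gamma^0 psi(0,.)) *)
  (forall x1 x2, Psi 0 x1 x2 = szero /\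
     pdS Dt Psi 0 x1 x2 = sscal Ci (mv gamma0 (psi 0 x1 x2))) ->
  (* (i) *)
  (forall t x1 x2, 0 <= t ->
     let psit := fun t x1 x2 => sadd (psi t x1 x2) (sscal Ci (dirac (rmulS v psi) t x1 x2)) in
     sscal (- Ci)%C (dirac psit t x1 x2)
     = sadd (N1 psi v t x1 x2) (sadd (N2 psi t x1 x2) (sscal (RtoC 2) (Q0 psi v t x1 x2))))
  /\
  (* (ii) *)
  (forall t x1 x2, 0 <= t ->
     let Psit := fun t x1 x2 => ssub (Psi t x1 x2) (rmulS v psi t x1 x2) in
     sopp (boxS Psit t x1 x2)
     = sopp (sadd (N1 psi v t x1 x2) (sadd (N2 psi t x1 x2) (sscal (RtoC 2) (Q0 psi v t x1 x2)))))
  /\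
  (* (iii) *)
  (forall t x1 x2, 0 <= t ->
     let vt := fun t x1 x2 =>
       (RtoC (v t x1 x2) - hdot (psi t x1 x2) (mv gamma0 (psi t x1 x2)))%C in
     (- boxC vt t x1 x2 + vt t x1 x2)%C = (N3 psi v t x1 x2 + N4 psi t x1 x2)%C)
  /\
  (* (iv) *)
  (forall (I : multi6) t x1 x2, 0 <= t -> (x1, x2) <> (0, 0) ->
     minus_part x1 x2 (GammaI I psi t x1 x2)
     = sscal (- Ci)%C (mv (madd I2 (mscal (RtoC (-1)) (omgg x1 x2)))
                          (gammaG (GammaI I Psi) t x1 x2))).
Proof.
  intros Hpsi HPsi Hv Hdirac Hkg HboxPsi Hinit.
  apply smoothS_cmps in Hpsi, HPsi.
  repeat split.
  - now apply dirac_psi_tilde.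
  - now apply wave_Psi_tilde.
  - now apply kg_v_tilde.
  - intros. now apply good_derivatives_GammaI.
Qed.
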